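(* Let $X$ be an angled $G$-complex on which $G$ acts properly and cocompactly, and suppose $\kappa(f)\le0$ for each $2$-cell $f$ of $X$. If $H$ is a subgroup of $G$, $Y$ is an $H$-cocompact $H$-complex, and $Y\to X$ is an $H$-equivariant immersion, then \[|\mathrm{nega}(H,Y)|\le\frac{2\pi\cdot\chi(H,Y)-B_+(G,X)\cdot|\mathrm{pos}(H,Y)|}{B_-(G,X)}.\]
   Context: A $G$-complex is a combinatorial 2-complex with cellular $G$-action without inversions; angles $\measuredangle(c)$ are $G$-invariant reals on corners of $2$-cells, and $Y$ carries the angles pulled back from $X$. For a $2$-cell $f$, $\kappa(f)=\sum_{c\in\mathrm{corners}(f)}\measuredangle(c)-\pi(|\partial f|-2)$ (times $|G_f|^{-1}$ for orbits). $\mathrm{link}(x)$ of a $0$-cell has a vertex per end of a $1$-cell at $x$ and an edge (with angle) per corner at $x$. For a group $K$, $|K|^{-1}=1/|K|$ if finite, else $0$; for a graph $\Delta$ with $K$-action, finitely many orbits and edge angles, $\kappa(K,\Delta)=2\pi|K|^{-1}-\sum_v\pi|K_v|^{-1}+\sum_e(\pi-\measuredangle(e))|K_e|^{-1}$ (sums over orbit representatives). For $K\le G_x$, a $K$-section of $\mathrm{link}(x)$ is a $K$-invariant subgraph with finitely many $K$-orbits. $B_-(G,X)$ is the maximum of $\kappa(K,\Delta)$ over all $0$-cells $x$, subgroups $K\le G_x$ and $K$-sections $\Delta$ of $\mathrm{link}(x)$ with $\kappa(K,\Delta)<0$ (or $-1$ if there are none); $B_+(G,X)$ is the maximum over those with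 $\kappa(K,\Delta)\ge0$ (or $0$ if none). For $v\in I^0(H,Y)$ (the $H$-orbits of $0$-cells) with representative $y$, $\kappa(v)=\kappa(H_y,\mathrm{link}(y,Y))$; $\mathrm{nega}(H,Y)=\{v:\kappa(v)<0\}$, $\mathrm{pos}(H,Y)=\{v:\kappa(v)>0\}$. $\chi(H,Y)=\sum_{I^0}|H_\sigma|^{-1}-\sum_{I^1}|H_\sigma|^{-1}+\sum_{I^2}|H_\sigma|^{-1}$ over $H$-orbits of cells. *)

From Stdlib Require Import Reals List ClassicalEpsilon.
Open Scope R_scope.
Set Implicit Arguments.
Unset Strict Implicit.

Record Group := {
  gcar :> Type;
  gmul : gcar -> gcar -> gcar;
  gone : gcar;
  ginv : gcar -> gcar;
  gmulA : forall a b c, gmul a (gmul b c) = gmul (gmul a b) c;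
  gmul1l : forall a, gmul gone a = a;
  gmulVl : forall a, gmul (ginv a) a = gone }.

Definition is_subgroup (G : Group) (K : G -> Prop) : Prop :=
  K (@gone G) /\ (forall a b, K a -> K b -> K (@gmul G a b)) /\
  (forall a, K a -> K (@ginv G a)).

Definition is_hom (H G : Group) (i : H -> G) : Prop :=
  forall a b, i (@gmul H a b) = @gmul G (i a) (i b).

Definition enumerates {T : Type} (P : T -> Prop) (s : list T) : Prop :=
  NoDup s /\ forall x, P x <-> In x s.
Definition is_finite {T : Type} (P : T -> Prop) : Prop := exists s, enumerates P s.

Definition lsum {T : Type} (w : T -> R) (s : list T) : R :=
  fold_right (fun x acc => w x + acc) 0 s.

(* sum of w over a finite set P (0 if P is infinite) *)
Definition fin_sum {T : Type} (P : T -> Prop) (w : T -> R) : R :=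
  match excluded_middle_informative (is_finite P) with
  | left h => lsum w (proj1_sig (constructive_indefinite_description _ h))
  | right _ => 0
  end.
Definition fin_card {T : Type} (P : T -> Prop) : R := fin_sum P (fun _ => 1).

(* |K|^{-1} = 1/|K| if K is finite, 0 otherwise *)
Definition inv_card {T : Type} (P : T -> Prop) : R :=
  match excluded_middle_informative (is_finite P) with
  | left _ => / fin_card P
  | right _ => 0
  end.

Definition is_action (G : Group) {T : Type} (a : G -> T -> T) : Prop :=
  (forall x, a (@gone G) x = x) /\ (forall g h x, a (@gmul G g h) x = a g (a h x)).

Definition orbit_rel (G : Group) {T : Type} (a : G -> T -> T) (K : G -> Prop) (x y : T) :=
  exists g, K g /\ a g x = y.

Definition stab (G : Group) {T : Type} (a : G -> T -> T) (K : G -> Prop) (x : T) : G -> Prop :=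
  fun g => K g /\ a g x = x.

Definition orbit_reps (G : Group) {T : Type} (a : G -> T -> T) (K : G -> Prop)
  (D : T -> Prop) (s : list T) : Prop :=
  (forall x, In x s -> D x) /\
  (forall x, D x -> exists y, In y s /\ orbit_rel a K y x) /\
  NoDup s /\ (forall y z, In y s -> In z s -> orbit_rel a K y z -> y = z).

Definition finitely_many_orbits (G : Group) {T : Type} (a : G -> T -> T) (K : G -> Prop)
  (D : T -> Prop) : Prop := exists s, orbit_reps a K D s.

Definition orbit_sum (G : Group) {T : Type} (a : G -> T -> T) (K : G -> Prop)
  (D : T -> Prop) (w : T -> R) : R :=
  match excluded_middle_informative (finitely_many_orbits a K D) with
  | left h => lsum w (proj1_sig (constructive_indefinite_description _ h))
  | right _ => 0
  end.

Definition orbit_count (G : Group) {T : Type} (a : G -> T -> T) (K : G -> Prop)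
  (D : T -> Prop) : R := orbit_sum a K D (fun _ => 1).

(* 1-cells are given with their two ends (half-edges); a 2-cell is given by its
   cyclic sequence of corners: corner c of 2-cell cface c lies between the ends
   cend1 c and cend2 c (ends at the same 0-cell), and the next corner nxt c along
   the boundary cycle starts at the opposite end of the 1-cell ending at cend2 c. *)
Record cx2 := {
  V0 : Type; E1 : Type; F2 : Type;
  NE : Type;   (* ends of 1-cells *)
  CO : Type;   (* corners of 2-cells *)
  en_edge : NE -> E1;
  en_vert : NE -> V0;
  opp : NE -> NE;
  cface : CO -> F2;
  cend1 : CO -> NE;
  cend2 : CO -> NE;
  nxt : CO -> CO }.

Definition cvert (X : cx2) (c : CO X) : V0 X := en_vert (cend1 c).

Definition is_cx2 (X : cx2) : Prop :=
  (forall n, @opp X (@opp X n) = n) /\ (forall n, @opp X n <> n) /\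
  (forall n, en_edge (@opp X n) = en_edge n) /\
  (forall e : E1 X, exists n, en_edge n = e) /\
  (forall n m, en_edge n = en_edge m -> m = n \/ m = @opp X n) /\
  (forall c : CO X, en_vert (cend1 c) = en_vert (cend2 c)) /\
  (forall c, cface (@nxt X c) = cface c) /\
  (forall c, cend1 (@nxt X c) = @opp X (cend2 c)) /\
  (forall f, exists c0 (n : nat), (0 < n)%nat /\ Nat.iter n (@nxt X) c0 = c0 /\
     (forall c, cface c = f <-> exists k, (k < n)%nat /\ c = Nat.iter k (@nxt X) c0) /\
     (forall k l, (k < n)%nat -> (l < n)%nat ->
        Nat.iter k (@nxt X) c0 = Nat.iter l (@nxt X) c0 -> k = l)).

Definition bdlen (X : cx2) (f : F2 X) : R := fin_card (fun c : CO X => cface c = f).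

(* combinatorial maps (cells to cells of the same dimension, 2-cells possibly reversed) *)
Record cmap (Y X : cx2) := {
  mV : V0 Y -> V0 X; mE : E1 Y -> E1 X; mF : F2 Y -> F2 X;
  mN : NE Y -> NE X; mC : CO Y -> CO X }.

Definition is_cmap (Y X : cx2) (m : cmap Y X) : Prop :=
  (forall n, mE m (en_edge n) = en_edge (mN m n)) /\
  (forall n, mV m (en_vert n) = en_vert (mN m n)) /\
  (forall n, mN m (@opp Y n) = @opp X (mN m n)) /\
  (forall c, mF m (cface c) = cface (mC m c)) /\
  (forall f : F2 Y,
     (forall c, cface c = f -> mC m (@nxt Y c) = @nxt X (mC m c) /\
        cend1 (mC m c) = mN m (cend1 c) /\ cend2 (mC m c) = mN m (cend2 c)) \/
     (forall c, cface c = f -> @nxt X (mC m (@nxt Y c)) = mC m c /\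
        cend1 (mC m c) = mN m (cend2 c) /\ cend2 (mC m c) = mN m (cend1 c))) /\
  (forall c c', cface c = cface c' -> mC m c = mC m c' -> c = c').

(* immersion: combinatorial map that is injective on each link *)
Definition is_immersion (Y X : cx2) (m : cmap Y X) : Prop :=
  is_cmap m /\
  (forall n n', en_vert n = en_vert n' -> mN m n = mN m n' -> n = n') /\
  (forall c c', cvert c = cvert c' -> mC m c = mC m c' -> c = c').

Record cxact (G : Group) (X : cx2) := {
  aV : G -> V0 X -> V0 X; aE : G -> E1 X -> E1 X; aF : G -> F2 X -> F2 X;
  aN : G -> NE X -> NE X; aC : G -> CO X -> CO X }.

Definition act_map (G : Group) (X : cx2) (a : cxact G X) (g : G) : cmap X X :=
  {| mV := aV a g; mE := aE a g; mF := aF a g; mN := aN a g; mC := aC a g |}.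

(* cellular G-action without inversions *)
Definition is_Gcomplex (G : Group) (X : cx2) (a : cxact G X) : Prop :=
  is_cx2 X /\
  is_action (aV a) /\ is_action (aE a) /\ is_action (aF a) /\
  is_action (aN a) /\ is_action (aC a) /\
  (forall g, is_cmap (act_map a g)) /\
  (forall g e, aE a g e = e -> forall n, en_edge n = e -> aN a g n = n).

Definition allG (G : Group) : G -> Prop := fun _ => True.

Definition proper_action (G : Group) (X : cx2) (a : cxact G X) : Prop :=
  (forall x, is_finite (stab (aV a) (@allG G) x)) /\
  (forall e, is_finite (stab (aE a) (@allG G) e)) /\
  (forall f, is_finite (stab (aF a) (@allG G) f)).

Definition cocompact (G : Group) (X : cx2) (a : cxact G X) : Prop :=
  finitely_many_orbits (aV a) (@allG G) (fun _ => True) /\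
  finitely_many_orbits (aE a) (@allG G) (fun _ => True) /\
  finitely_many_orbits (aF a) (@allG G) (fun _ => True).

Definition angle_invariant (G : Group) (X : cx2) (a : cxact G X) (ang : CO X -> R) : Prop :=
  forall g c, ang (aC a g c) = ang c.

Definition equivariant (H G : Group) (i : H -> G) (Y X : cx2) (aY : cxact H Y)
  (aX : cxact G X) (m : cmap Y X) : Prop :=
  (forall h y, mV m (aV aY h y) = aV aX (i h) (mV m y)) /\
  (forall h e, mE m (aE aY h e) = aE aX (i h) (mE m e)) /\
  (forall h f, mF m (aF aY h f) = aF aX (i h) (mF m f)) /\
  (forall h n, mN m (aN aY h n) = aN aX (i h) (mN m n)) /\
  (forall h c, mC m (aC aY h c) = aC aX (i h) (mC m c)).

Definition kappa_face (X : cx2) (ang : CO X -> R) (f : F2 X) : R :=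
  fin_sum (fun c : CO X => cface c = f) ang - PI * (bdlen f - 2).

(* (DV, DE) is a K-section of link(x): vertices = ends at x, edges = corners at x *)
Definition is_section (G : Group) (X : cx2) (a : cxact G X) (x : V0 X) (K : G -> Prop)
  (DV : NE X -> Prop) (DE : CO X -> Prop) : Prop :=
  (forall n, DV n -> en_vert n = x) /\ (forall c, DE c -> cvert c = x) /\
  (forall c, DE c -> DV (cend1 c) /\ DV (cend2 c)) /\
  (forall g n, K g -> DV n -> DV (aN a g n)) /\
  (forall g c, K g -> DE c -> DE (aC a g c)) /\
  finitely_many_orbits (aN a) K DV /\ finitely_many_orbits (aC a) K DE.

Definition kappa_link (G : Group) (X : cx2) (a : cxact G X) (ang : CO X -> R)
  (K : G -> Prop) (DV : NE X -> Prop) (DE : CO X -> Prop) : R :=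
  2 * PI * inv_card K
  - orbit_sum (aN a) K DV (fun n => PI * inv_card (stab (aN a) K n))
  + orbit_sum (aC a) K DE (fun c => (PI - ang c) * inv_card (stab (aC a) K c)).

Definition section_value (G : Group) (X : cx2) (a : cxact G X) (ang : CO X -> R) (r : R) :=
  exists (x : V0 X) (K : G -> Prop) (DV : NE X -> Prop) (DE : CO X -> Prop),
    is_subgroup K /\ (forall g, K g -> aV a g x = x) /\
    is_section a x K DV DE /\ r = kappa_link a ang K DV DE.

Definition B_minus (G : Group) (X : cx2) (a : cxact G X) (ang : CO X -> R) : R :=
  let S := fun r => section_value a ang r /\ r < 0 in
  match excluded_middle_informative (exists r, S r) with
  | left _ => epsilon (inhabits 0) (fun b => S b /\ forall r, S r -> r <= b)
  | right _ => -1
  end.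

Definition B_plus (G : Group) (X : cx2) (a : cxact G X) (ang : CO X -> R) : R :=
  let S := fun r => section_value a ang r /\ 0 <= r in
  match excluded_middle_informative (exists r, S r) with
  | left _ => epsilon (inhabits 0) (fun b => S b /\ forall r, S r -> r <= b)
  | right _ => 0
  end.

Definition kappa_vertex (H : Group) (Y : cx2) (a : cxact H Y) (ang : CO Y -> R) (y : V0 Y) : R :=
  kappa_link a ang (stab (aV a) (@allG H) y)
    (fun n : NE Y => en_vert n = y) (fun c : CO Y => cvert c = y).

Definition nega_count (H : Group) (Y : cx2) (a : cxact H Y) (ang : CO Y -> R) : R :=
  orbit_count (aV a) (@allG H) (fun y => kappa_vertex a ang y < 0).
Definition pos_count (H : Group) (Y : cx2) (a : cxact H Y) (ang : CO Y -> R) : R :=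
  orbit_count (aV a) (@allG H) (fun y => 0 < kappa_vertex a ang y).

Definition chi (H : Group) (Y : cx2) (a : cxact H Y) : R :=
  orbit_sum (aV a) (@allG H) (fun _ => True) (fun x => inv_card (stab (aV a) (@allG H) x))
  - orbit_sum (aE a) (@allG H) (fun _ => True) (fun e => inv_card (stab (aE a) (@allG H) e))
  + orbit_sum (aF a) (@allG H) (fun _ => True) (fun f => inv_card (stab (aF a) (@allG H) f)).

(* The combinatorial Gauss-Bonnet formula for the cocompact H-complex Y reads
   2 pi chi(H,Y) = sum_v kappa(v) + sum_f kappa(f) |H_f|^-1  (sums over H-orbits).
   The immersion preserves the angles and boundary lengths of 2-cells, so every
   kappa(f) is <= 0. At a 0-cell y the immersion maps link(y) bijectively and
   equivariantly onto an i(H_y)-section of link(phi y), so kappa(v) is one of the values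
   whose negative (resp. nonnegative) maximum defines B_- (resp. B_+); these maxima
   exist because properness and cocompactness leave only finitely many such values up
   to translation. Hence 2 pi chi <= B_- |nega| + B_+ |pos|, and B_- < 0. *)

From Pilot Require Import Defs.
From Stdlib Require Import Reals Lra Lia List Permutation ClassicalEpsilon Classical
  FunctionalExtensionality PropExtensionality.
Open Scope R_scope.
Set Implicit Arguments.

Lemma pred_ext T (P Q : T -> Prop) : (forall x, P x <-> Q x) -> P = Q.
Proof.
  intros H; apply functional_extensionality; intro x; apply propositional_extensionality; auto.
Qed.

(** * Finite sums *)

Section ListSums.
Context {T : Type}.
Implicit Types (w : T -> R) (s t : list T).

Lemma lsum_cons w x s : lsum w (x :: s) = w x + lsum w s.
Proof. reflexivity. Qed.

Lemma lsum_app w s t : lsum w (s ++ t) = lsum w s + lsum w t.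
Proof. induction s; simpl; [lra | rewrite IHs; lra]. Qed.

Lemma lsum_map U (f : U -> T) w (s : list U) : lsum w (map f s) = lsum (fun x => w (f x)) s.
Proof. induction s; simpl; congruence. Qed.

Lemma lsum_ext w w' s : (forall x, In x s -> w x = w' x) -> lsum w s = lsum w' s.
Proof. induction s; simpl; intros H; auto. rewrite H, IHs; auto. Qed.

Lemma lsum_perm w s t : Permutation s t -> lsum w s = lsum w t.
Proof. induction 1; simpl; lra. Qed.

Lemma lsum_add w w' s : lsum (fun x => w x + w' x) s = lsum w s + lsum w' s.
Proof. induction s; simpl; lra. Qed.

Lemma lsum_scal w c s : lsum (fun x => c * w x) s = c * lsum w s.
Proof. induction s; simpl; lra. Qed.

Lemma lsum_opp w s : lsum (fun x => - w x) s = - lsum w s.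
Proof. induction s; simpl; lra. Qed.

Lemma lsum_const c s : lsum (fun _ => c) s = c * INR (length s).
Proof. induction s; simpl length; [simpl; lra|]. rewrite lsum_cons, IHs, S_INR; lra. Qed.

Lemma lsum_le w w' s : (forall x, In x s -> w x <= w' x) -> lsum w s <= lsum w' s.
Proof.
  induction s; simpl; intros H; [lra|].
  pose proof (H a (or_introl eq_refl)); pose proof (IHs (fun x h => H x (or_intror h))); lra.
Qed.

Lemma lsum_nonpos w s : (forall x, In x s -> w x <= 0) -> lsum w s <= 0.
Proof.
  intros H; apply Rle_trans with (lsum (fun _ => 0) s); [apply lsum_le; auto|].
  rewrite lsum_const; lra.
Qed.

Lemma lsum_concat w (L : list (list T)) : lsum w (concat L) = lsum (lsum w) L.
Proof. induction L; simpl; auto. rewrite lsum_app, IHL; auto. Qed.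
End ListSums.

Lemma lsum_comm T U (F : T -> U -> R) s (t : list U) :
  lsum (fun x => lsum (F x) t) s = lsum (fun y => lsum (fun x => F x y) s) t.
Proof.
  induction s; simpl; [rewrite lsum_const; lra|].
  rewrite IHs, <- lsum_add; reflexivity.
Qed.



Definition indicator (P : Prop) : R := if excluded_middle_informative P then 1 else 0.

Lemma indicator_true (P : Prop) : P -> indicator P = 1.
Proof. unfold indicator; destruct excluded_middle_informative; tauto. Qed.

Lemma indicator_false (P : Prop) : ~ P -> indicator P = 0.
Proof. unfold indicator; destruct excluded_middle_informative; tauto. Qed.

Lemma lsum_indicator_eq T (s : list T) (F : T -> R) x : NoDup s -> In x s ->
  lsum (fun y => indicator (x = y) * F y) s = F x.
Proof.
  induction s; simpl; intros Hn Hi; [tauto|]. inversion Hn; subst.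
  destruct Hi as [->|Hi].
  - rewrite indicator_true, (lsum_ext _ (fun _ => 0)), lsum_const; auto; [lra|].
    intros y Hy; rewrite indicator_false; [lra|]. intros ->; tauto.
  - rewrite indicator_false, IHs; auto; [lra|]. intros ->; tauto.
Qed.

Section FiniteSets.
Variable T : Type.
Implicit Types (P Q : T -> Prop) (s : list T).

Lemma enumerates_Permutation P s t : enumerates P s -> enumerates P t -> Permutation s t.
Proof.
  intros [Hs Ps] [Ht Pt]. apply NoDup_Permutation; auto. intro x; rewrite <- Ps, Pt; tauto.
Qed.

Lemma fin_sum_enum P w s : enumerates P s -> fin_sum P w = lsum w s.
Proof.
  intros He. unfold fin_sum. destruct excluded_middle_informative as [h|h].
  - destruct constructive_indefinite_description as [t Ht]; simpl.
    apply lsum_perm; eapply enumerates_Permutation; eauto.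
  - exfalso; apply h; exists s; auto.
Qed.

Lemma fin_card_enum P s : enumerates P s -> fin_card P = INR (length s).
Proof. intros He; unfold fin_card; rewrite (fin_sum_enum _ He), lsum_const; lra. Qed.

Lemma inv_card_enum P s : enumerates P s -> inv_card P = / INR (length s).
Proof.
  intros He; unfold inv_card. destruct excluded_middle_informative as [h|h].
  - rewrite (fin_card_enum He); auto.
  - exfalso; apply h; exists s; auto.
Qed.

Lemma inv_card_infinite P : ~ is_finite P -> inv_card P = 0.
Proof. unfold inv_card; destruct excluded_middle_informative; tauto. Qed.

Lemma inv_card_nonneg P : 0 <= inv_card P.
Proof.
  unfold inv_card; destruct excluded_middle_informative as [[s Hs]|]; [|lra].
  rewrite (fin_card_enum Hs). destruct (length s); [simpl; rewrite Rinv_0; lra|].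
  apply Rlt_le, Rinv_0_lt_compat, lt_0_INR; lia.
Qed.

Lemma fin_card_empty P : (forall x, ~ P x) -> fin_card P = 0.
Proof.
  intros H; rewrite (fin_card_enum (s := nil)); auto.
  split; [constructor|]; simpl; firstorder.
Qed.

Lemma finite_of_incl_list (l : list T) : forall P, (forall x, P x -> In x l) -> is_finite P.
Proof.
  induction l as [|a l IH]; intros P HP.
  - exists nil; split; [constructor|]. intro x; split; [intro h; apply (HP x h)|simpl; tauto].
  - destruct (IH (fun x => P x /\ x <> a)) as [s [Hs Ps]].
    { intros x [Px Hx]. destruct (HP x Px); auto. congruence. }
    destruct (classic (P a)) as [Pa|Pa].
    + exists (a :: s); split; [constructor; auto; rewrite <- Ps; tauto|].
      intro x; simpl; rewrite <- Ps.
      split; [intro; destruct (classic (a = x)); [tauto|right; split; auto]|].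
      intros [->|[]]; auto.
    + exists s; split; auto. intro x; rewrite <- Ps; split; [|tauto].
      intro h; split; auto; intros ->; tauto.
Qed.

Lemma finite_incl P Q : is_finite P -> (forall x, Q x -> P x) -> is_finite Q.
Proof. intros [l [_ Hl]] HQ. apply (finite_of_incl_list l). intros x q; apply Hl; auto. Qed.

Definition decide (P : Prop) : bool := if excluded_middle_informative P then true else false.

Lemma decide_spec (P : Prop) : decide P = true <-> P.
Proof. unfold decide; destruct excluded_middle_informative; intuition discriminate. Qed.

Lemma lsum_indicator_filter Q s :
  lsum (fun x => indicator (Q x)) s = INR (length (filter (fun x => decide (Q x)) s)).
Proof.
  induction s as [|a s IH]; [reflexivity|]. rewrite lsum_cons; simpl filter.
  destruct (decide (Q a)) eqn:E; rewrite IH.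
  - rewrite indicator_true by (apply decide_spec; auto). simpl length; rewrite S_INR; lra.
  - rewrite indicator_false by (intro q; apply decide_spec in q; congruence). lra.
Qed.

Lemma lsum_indicator_enum P Q s : enumerates P s ->
  lsum (fun x => indicator (Q x)) s = fin_card (fun x => P x /\ Q x).
Proof.
  intros [Hn Hp]. rewrite lsum_indicator_filter. symmetry; apply fin_card_enum.
  split; [apply NoDup_filter; auto|].
  intro x; rewrite filter_In, decide_spec, Hp; tauto.
Qed.
End FiniteSets.

Section Bijection.
Variables (T U : Type) (P : T -> Prop) (Q : U -> Prop) (f : T -> U).
Hypotheses (f_maps : forall x, P x -> Q (f x))
  (f_onto : forall y, Q y -> exists x, P x /\ f x = y)
  (f_inj : forall x y, P x -> P y -> f x = f y -> x = y).

Lemma enumerates_bij s : enumerates P s -> enumerates Q (map f s).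
Proof.
  intros [Hs Ps]. split.
  - apply FinFun.Injective_map_NoDup_in; auto. intros x y hx hy; apply f_inj; apply Ps; auto.
  - intro y; split.
    + intro hy; destruct (f_onto hy) as [x [px <-]]; apply in_map, Ps, px.
    + rewrite in_map_iff; intros [x [<- hx]]; apply f_maps, Ps, hx.
Qed.

Lemma finite_bij_iff : is_finite P <-> is_finite Q.
Proof.
  split; [intros [s Hs]; exists (map f s); apply enumerates_bij; auto|].
  intros [t [_ Qt]].
  assert (cover : exists l, forall x, P x -> In (f x) t -> In x l).
  { assert (Ht : forall y, In y t -> Q y) by (intros; apply Qt; auto).
    clear Qt; induction t as [|a t IH]; [exists nil; simpl; tauto|].
    destruct IH as [l Hl]; [intros; apply Ht; simpl; auto|].
    destruct (f_onto (Ht a (or_introl eq_refl))) as [xa [pa fa]].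
    exists (xa :: l). intros x px [hx|hx]; [left; apply f_inj; congruence|right; auto]. }
  destruct cover as [l Hl]. apply (finite_of_incl_list l).
  intros x px; apply Hl, Qt, f_maps; auto.
Qed.

Lemma fin_sum_bij (w : U -> R) : fin_sum P (fun x => w (f x)) = fin_sum Q w.
Proof.
  destruct (classic (is_finite P)) as [[s Hs]|h].
  - rewrite (fin_sum_enum _ Hs), (fin_sum_enum _ (enumerates_bij Hs)), lsum_map; auto.
  - unfold fin_sum. destruct excluded_middle_informative; [tauto|].
    destruct excluded_middle_informative; auto.
    exfalso; apply h, finite_bij_iff; auto.
Qed.

Lemma fin_card_bij : fin_card P = fin_card Q.
Proof. apply (fin_sum_bij (fun _ => 1)). Qed.

Lemma inv_card_bij : inv_card P = inv_card Q.
Proof.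
  destruct (classic (is_finite P)) as [[s Hs]|h].
  - rewrite (inv_card_enum Hs), (inv_card_enum (enumerates_bij Hs)), length_map; auto.
  - rewrite !inv_card_infinite; auto. rewrite <- finite_bij_iff; auto.
Qed.
End Bijection.

Lemma finite_of_inj T U (P : T -> Prop) (Q : U -> Prop) (f : T -> U) :
  (forall x, P x -> Q (f x)) -> (forall x y, P x -> P y -> f x = f y -> x = y) ->
  is_finite Q -> is_finite P.
Proof.
  intros Hm Hi HQ.
  apply (proj2 (finite_bij_iff P (fun y => exists x, P x /\ f x = y) f
    (fun x h => ex_intro _ x (conj h eq_refl)) (fun y h => h) Hi)).
  apply (finite_incl _ HQ). intros y [x [px <-]]; auto.
Qed.

(** * Groups, actions and orbit sums *)

Section GroupTheory.
Variable G : Group.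
Notation "a * b" := (@gmul G a b).
Notation "1" := (@gone G).
Notation "a ^-1" := (@ginv G a) (at level 2).

Lemma gmulVr (a : G) : a * a^-1 = 1.
Proof.
  rewrite <- (gmul1l (a * a^-1)), <- (gmulVl (a^-1)) at 1.
  rewrite <- gmulA, (@gmulA G a^-1 a), gmulVl, gmul1l, gmulVl; reflexivity.
Qed.

Lemma gmul1r (a : G) : a * 1 = a.
Proof. rewrite <- (gmulVl a), gmulA, gmulVr, gmul1l; auto. Qed.

Lemma gmulKl (a b : G) : a^-1 * (a * b) = b.
Proof. rewrite gmulA, gmulVl, gmul1l; auto. Qed.

Lemma gmulKr (a b : G) : a * (a^-1 * b) = b.
Proof. rewrite gmulA, gmulVr, gmul1l; auto. Qed.

Lemma gmulI {a b c : G} : a * b = a * c -> b = c.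
Proof. intros H. rewrite <- (gmulKl a b), H, gmulKl; auto. Qed.

Lemma gmulIr {a b c : G} : b * a = c * a -> b = c.
Proof.
  intros H. rewrite <- (gmul1r b), <- (gmulVr a), gmulA, H, <- gmulA, gmulVr, gmul1r; auto.
Qed.

Lemma conj_inj (g k h : G) : g * (k * g^-1) = g * (h * g^-1) -> k = h.
Proof. intros E; apply gmulI in E; exact (gmulIr E). Qed.

Lemma conjK (g k : G) : g^-1 * ((g * (k * g^-1)) * g) = k.
Proof. rewrite <- gmulA, gmulKl, <- gmulA, gmulVl, gmul1r; auto. Qed.

Lemma conjKV (g k : G) : g * ((g^-1 * (k * g)) * g^-1) = k.
Proof. rewrite <- gmulA, gmulKr, <- gmulA, gmulVr, gmul1r; auto. Qed.

Section Subgroups.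
Variable K : G -> Prop.
Hypothesis HK : is_subgroup K.

Lemma subgroup1 : K 1. Proof. apply HK. Qed.
Lemma subgroupM a b : K a -> K b -> K (a * b). Proof. apply HK. Qed.
Lemma subgroupV a : K a -> K (a^-1). Proof. apply HK. Qed.

End Subgroups.

Lemma allG_subgroup : is_subgroup (@allG G).
Proof. unfold allG; repeat split. Qed.

Section Action.
Variables (T : Type) (a : G -> T -> T).
Hypothesis Ha : is_action a.

Lemma act1 x : a 1 x = x. Proof. apply Ha. Qed.
Lemma actM g h x : a (g * h) x = a g (a h x). Proof. apply Ha. Qed.

Lemma actK g x : a (g^-1) (a g x) = x.
Proof. rewrite <- actM, gmulVl, act1; auto. Qed.

Lemma actKV g x : a g (a (g^-1) x) = x.
Proof. rewrite <- actM, gmulVr, act1; auto. Qed.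

Lemma act_inj g x y : a g x = a g y -> x = y.
Proof. intros H. rewrite <- (actK g x), H, actK; auto. Qed.

Lemma act_conj g k x : a g (a k x) = a (g * (k * g^-1)) (a g x).
Proof. rewrite !actM, actK; auto. Qed.

Lemma stab_subgroup K x : is_subgroup K -> is_subgroup (stab a K x).
Proof.
  intros HK. unfold stab; split; [|split].
  - split; [apply subgroup1; auto|apply act1].
  - intros g h [Kg Eg] [Kh Eh]. split; [apply subgroupM; auto|]. rewrite actM, Eh, Eg; auto.
  - intros g [Kg Eg]. split; [apply subgroupV; auto|]. rewrite <- Eg at 1. apply actK.
Qed.

Lemma stab_allG_conj g x :
  stab a (@allG G) (a g x) = (fun k => stab a (@allG G) x (g^-1 * (k * g))).
Proof.
  apply pred_ext; intro k; unfold stab, allG. rewrite !actM.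
  split; intros [_ E]; split; auto.
  - rewrite E, actK; auto.
  - apply act_inj with (g := g^-1). rewrite E, actK; auto.
Qed.

Section Orbits.
Variable K : G -> Prop.
Hypothesis HK : is_subgroup K.

Lemma orbit_refl x : orbit_rel a K x x.
Proof. exists 1; split; [apply subgroup1; auto|apply act1]. Qed.

Lemma orbit_sym x y : orbit_rel a K x y -> orbit_rel a K y x.
Proof. intros [g [kg <-]]. exists (g^-1); split; [apply subgroupV; auto|apply actK]. Qed.

Lemma orbit_trans x y z : orbit_rel a K x y -> orbit_rel a K y z -> orbit_rel a K x z.
Proof.
  intros [g [kg <-]] [h [kh <-]]. exists (h * g); split; [apply subgroupM; auto|apply actM].
Qed.

Lemma inv_card_stab_act k x : K k -> inv_card (stab a K (a k x)) = inv_card (stab a K x).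
Proof.
  intros Kk. symmetry. apply (inv_card_bij _ _ (fun g => k * (g * k^-1))).
  - intros g [Kg Hg]. split.
    + apply subgroupM, subgroupM, subgroupV; auto.
    + rewrite <- act_conj, Hg; auto.
  - intros g [Kg Hg]. exists (k^-1 * (g * k)). split; [split|apply conjKV].
    + apply subgroupM, subgroupM; auto; apply subgroupV; auto.
    + rewrite !actM, Hg, actK; auto.
  - intros g h _ _; apply conj_inj.
Qed.

Lemma orbit_reps_lsum_eq D (w : T -> R) s t :
  (forall g x, K g -> D x -> w (a g x) = w x) ->
  orbit_reps a K D s -> orbit_reps a K D t -> lsum w s = lsum w t.
Proof.
  intros Hw [sD [sC [sN sU]]] [tD [tC [tN tU]]].
  set (rep := fun x => epsilon (inhabits x) (fun y => In y t /\ orbit_rel a K y x)).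
  assert (Hrep : forall x, D x -> In (rep x) t /\ orbit_rel a K (rep x) x).
  { intros x Dx; apply epsilon_spec, tC; auto. }
  transitivity (lsum w (map rep s)).
  - rewrite lsum_map. apply lsum_ext. intros x hx.
    destruct (Hrep x (sD x hx)) as [h1 [g [kg E]]]. rewrite <- E at 1; apply Hw; auto.
  - apply lsum_perm, NoDup_Permutation; auto.
    + apply FinFun.Injective_map_NoDup_in; auto. intros x y hx hy E.
      apply sU; auto. destruct (Hrep x (sD x hx)) as [_ h1], (Hrep y (sD y hy)) as [_ h2].
      rewrite E in h1. eapply orbit_trans; [apply orbit_sym, h1|exact h2].
    + intro y; split.
      * rewrite in_map_iff; intros [x [<- hx]]; apply Hrep, sD, hx.
      * intros hy. destruct (sC y (tD y hy)) as [x [hx hr]].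
        apply in_map_iff; exists x; split; auto.
        destruct (Hrep x (sD x hx)) as [h1 h2]. apply tU; auto. eapply orbit_trans; eauto.
Qed.

Lemma orbit_sum_reps D (w : T -> R) s :
  (forall g x, K g -> D x -> w (a g x) = w x) ->
  orbit_reps a K D s -> orbit_sum a K D w = lsum w s.
Proof.
  intros Hw Hs. unfold orbit_sum. destruct excluded_middle_informative as [h|h].
  - destruct constructive_indefinite_description as [t Ht]; simpl.
    eapply orbit_reps_lsum_eq; eauto.
  - exfalso; apply h; exists s; auto.
Qed.

Lemma orbit_sum_exists_reps D w : finitely_many_orbits a K D ->
  exists s, orbit_reps a K D s /\ orbit_sum a K D w = lsum w s.
Proof.
  intros h. unfold orbit_sum. destruct excluded_middle_informative as [h'|h']; [|tauto].
  exists (proj1_sig (constructive_indefinite_description _ h')).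
  split; [apply proj2_sig|reflexivity].
Qed.

Lemma orbit_sum_ext D w w' :
  (forall x, D x -> w x = w' x) -> orbit_sum a K D w = orbit_sum a K D w'.
Proof.
  intros H. unfold orbit_sum. destruct excluded_middle_informative as [h'|h']; auto.
  apply lsum_ext. intros x hx. apply H.
  apply (proj1 (proj2_sig (constructive_indefinite_description _ h'))); auto.
Qed.

Lemma finitely_many_orbits_of_finite D : is_finite D -> finitely_many_orbits a K D.
Proof.
  intros [l [_ Hl]]. assert (HD : forall x, D x -> In x l) by (intros; apply Hl; auto).
  clear Hl; revert D HD; induction l as [|b l IH]; intros D HD.
  - exists nil; repeat split; simpl; try tauto; [|constructor].
    intros x Dx; destruct (HD x Dx).
  - destruct (classic (D b)) as [Db|Db].
    2: { apply IH. intros x Dx. destruct (HD x Dx) as [->|]; tauto. }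
    destruct (IH (fun x => D x /\ ~ orbit_rel a K b x)) as [s [sD [sC [sN sU]]]].
    { intros x [Dx nx]. destruct (HD x Dx) as [->|]; auto. exfalso; apply nx, orbit_refl. }
    exists (b :: s). repeat split.
    + intros x [<-|hx]; auto. apply sD; auto.
    + intros x Dx. destruct (classic (orbit_rel a K b x)) as [o|o]; [exists b; simpl; auto|].
      destruct (sC x (conj Dx o)) as [y [hy hr]]; exists y; simpl; auto.
    + constructor; auto. intro hb. apply (proj2 (sD b hb)), orbit_refl.
    + intros y z [<-|hy] [<-|hz] hr; auto; exfalso.
      * apply (proj2 (sD z hz)); auto.
      * apply (proj2 (sD y hy)), orbit_sym; auto.
Qed.
End Orbits.

Lemma inv_card_stab_allG_act g x :
  inv_card (stab a (@allG G) (a g x)) = inv_card (stab a (@allG G) x).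
Proof. apply inv_card_stab_act; [apply allG_subgroup|exact I]. Qed.

End Action.
End GroupTheory.

Section OrbitStabiliser.
Variables (G : Group) (T : Type) (a : G -> T -> T) (K : G -> Prop) (D : T -> Prop).
Variables (lK : list G) (lD : list T) (u : T -> R).
Hypotheses (Ha : is_action a) (HK : is_subgroup K)
  (HlK : enumerates K lK) (HlD : enumerates D lD)
  (D_inv : forall g x, K g -> D x -> D (a g x))
  (u_inv : forall g x, K g -> D x -> u (a g x) = u x).

Lemma card_maps_to r c : D r ->
  lsum (fun k => indicator (a k r = c)) lK = indicator (orbit_rel a K r c) * fin_card (stab a K r).
Proof.
  intros Dr. rewrite (lsum_indicator_enum _ HlK).
  destruct (classic (orbit_rel a K r c)) as [[k0 [Kk0 E]]|no].
  - rewrite indicator_true, Rmult_1_l by (exists k0; auto). symmetry.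
    apply (fin_card_bij _ _ (fun s => gmul k0 s)).
    + intros s [Ks Es]. split; [apply subgroupM; auto|]. rewrite (actM Ha), Es; auto.
    + intros k [Kk Ek]. exists (gmul (ginv k0) k). split; [split|apply gmulKr].
      * apply subgroupM, Kk; auto. apply subgroupV; auto.
      * rewrite (actM Ha), Ek, <- E, (actK Ha); auto.
    + intros x y _ _; apply gmulI.
  - rewrite indicator_false, Rmult_0_l by auto. apply fin_card_empty.
    intros k [Kk Ek]. apply no; exists k; auto.
Qed.

Lemma length_enum_subgroup_pos (L : G -> Prop) (s : list G) :
  is_subgroup L -> enumerates L s -> 0 < INR (length s).
Proof.
  intros HL [_ Hs]. destruct s as [|g s]; [|apply lt_0_INR; simpl; lia].
  exfalso; apply (proj1 (Hs (@gone G))), subgroup1; auto.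
Qed.

Lemma orbit_weight r : D r ->
  u r * inv_card (stab a K r) * INR (length lK) =
  lsum (fun c => u c * indicator (orbit_rel a K r c)) lD.
Proof.
  intros Dr. assert (HKr := stab_subgroup Ha r HK).
  destruct (finite_incl _ (ex_intro _ lK HlK) (fun g (h : stab a K r g) => proj1 h)) as [s Hs].
  pose proof (length_enum_subgroup_pos HKr Hs) as Ps. rewrite (inv_card_enum Hs).
  assert (orbit_images : lsum (fun k => u (a k r)) lK = u r * INR (length lK)).
  { rewrite (lsum_ext _ (fun _ => u r)), lsum_const; auto.
    intros k hk; apply u_inv; auto; apply HlK; auto. }
  assert (fibres : lsum (fun k => u (a k r)) lK =
    INR (length s) * lsum (fun c => u c * indicator (orbit_rel a K r c)) lD).
  { rewrite (lsum_ext (fun k => u (a k r)) (fun k => lsum (fun c => indicator (a k r = c) * u c) lD)).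
    - rewrite lsum_comm, <- lsum_scal. apply lsum_ext. intros c _.
      rewrite (lsum_ext (fun k => _ * u c) (fun k => u c * indicator (a k r = c))) by (intros; lra).
      rewrite lsum_scal, card_maps_to, (fin_card_enum Hs); auto; lra.
    - intros k hk. assert (Kk : K k) by (apply HlK; auto).
      rewrite lsum_indicator_eq; [reflexivity|apply HlD|apply HlD, D_inv; auto]. }
  rewrite orbit_images in fibres.
  apply (Rmult_eq_reg_l (INR (length s))); [|lra]. rewrite <- fibres. field; lra.
Qed.

Lemma orbit_sum_inv_card_stab :
  orbit_sum a K D (fun c => u c * inv_card (stab a K c)) = lsum u lD * inv_card K.
Proof.
  assert (fmo : finitely_many_orbits a K D)
    by (apply finitely_many_orbits_of_finite; auto; exists lD; auto).
  destruct (orbit_sum_exists_reps (fun c => u c * inv_card (stab a K c)) fmo)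
    as [s [[sD [sC [sN sU]]] ->]].
  rewrite (inv_card_enum HlK). pose proof (length_enum_subgroup_pos HK HlK).
  apply (Rmult_eq_reg_r (INR (length lK))); [|lra].
  replace (lsum u lD * / INR (length lK) * INR (length lK)) with (lsum u lD) by (field; lra).
  rewrite Rmult_comm, <- lsum_scal.
  rewrite (lsum_ext _ (fun r => lsum (fun c => u c * indicator (orbit_rel a K r c)) lD))
    by (intros r hr; rewrite <- orbit_weight; auto; lra).
  rewrite lsum_comm. apply lsum_ext. intros c hc.
  destruct (sC c (proj2 (proj2 HlD c) hc)) as [r0 [hr0 or0]].
  rewrite lsum_scal, (lsum_ext _ (fun r => indicator (r0 = r) * 1)), lsum_indicator_eq; auto; [lra|].
  intros r hr. rewrite Rmult_1_r. destruct (classic (r0 = r)) as [<-|ne].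
  - rewrite !indicator_true; auto.
  - rewrite !indicator_false; auto. intros o. apply ne, sU; auto.
    eapply orbit_trans; eauto. apply orbit_sym; auto.
Qed.
End OrbitStabiliser.

Section Transport.
Variables (G1 G2 : Group) (T1 T2 : Type) (a1 : G1 -> T1 -> T1) (a2 : G2 -> T2 -> T2).
Variables (K1 : G1 -> Prop) (K2 : G2 -> Prop) (D1 : T1 -> Prop) (D2 : T2 -> Prop).
Variables (psi : G1 -> G2) (al : T1 -> T2).
Hypotheses (HK2 : is_subgroup K2) (Ha2 : is_action a2).
Hypotheses (psi_maps : forall g, K1 g -> K2 (psi g))
  (psi_onto : forall g2, K2 g2 -> exists g, K1 g /\ psi g = g2).
Hypotheses (D1_inv : forall g x, K1 g -> D1 x -> D1 (a1 g x))
  (al_equiv : forall g x, K1 g -> D1 x -> al (a1 g x) = a2 (psi g) (al x)).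
Hypotheses (al_maps : forall x, D1 x -> D2 (al x))
  (al_onto : forall y, D2 y -> exists x, D1 x /\ al x = y)
  (al_inj : forall x y, D1 x -> D1 y -> al x = al y -> x = y).

Lemma orbit_rel_transport x y : D1 x -> D1 y ->
  orbit_rel a1 K1 x y <-> orbit_rel a2 K2 (al x) (al y).
Proof.
  intros Dx Dy; split.
  - intros [g [Kg <-]]. exists (psi g); split; auto. symmetry; apply al_equiv; auto.
  - intros [g2 [Kg E]]. destruct (psi_onto Kg) as [g [Kg1 <-]].
    exists g; split; auto. apply al_inj; auto. rewrite al_equiv; auto.
Qed.

Lemma orbit_reps_transport s : orbit_reps a1 K1 D1 s -> orbit_reps a2 K2 D2 (map al s).
Proof.
  intros [sD [sC [sN sU]]]. repeat split.
  - intros y hy; apply in_map_iff in hy; destruct hy as [x [<- hx]]; auto.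
  - intros y Dy. destruct (al_onto Dy) as [x [Dx <-]]. destruct (sC x Dx) as [z [hz hr]].
    exists (al z); split; [apply in_map; auto|]. apply orbit_rel_transport; auto.
  - apply FinFun.Injective_map_NoDup_in; auto.
  - intros y z hy hz hr. apply in_map_iff in hy, hz.
    destruct hy as [x [<- hx]], hz as [x' [<- hx']].
    f_equal. apply sU; auto. apply orbit_rel_transport; auto.
Qed.

Lemma orbit_reps_transport_back t : orbit_reps a2 K2 D2 t -> exists s, orbit_reps a1 K1 D1 s.
Proof.
  intros [tD [tC [tN tU]]].
  assert (lift : exists s, (forall x, In x s -> D1 x) /\ map al s = t).
  { clear tC tN tU; induction t as [|y t IH]; [exists nil; simpl; tauto|].
    destruct IH as [s [sD <-]]; [intros; apply tD; simpl; auto|].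
    destruct (al_onto (tD y (or_introl eq_refl))) as [x [Dx <-]].
    exists (x :: s); split; [intros z [<-|hz]; auto|reflexivity]. }
  destruct lift as [s [sD <-]]. exists s. split; [auto|split; [|split]].
  - intros x Dx. destruct (tC (al x) (al_maps Dx)) as [y [hy hr]].
    apply in_map_iff in hy; destruct hy as [z [<- hz]].
    exists z; split; auto. apply orbit_rel_transport; auto.
  - eapply NoDup_map_inv; eauto.
  - intros y z hy hz hr. apply al_inj; auto. apply tU; try apply in_map; auto.
    apply orbit_rel_transport; auto.
Qed.

Lemma finitely_many_orbits_transport :
  finitely_many_orbits a1 K1 D1 <-> finitely_many_orbits a2 K2 D2.
Proof.
  split; [intros [s Hs]; exists (map al s); apply orbit_reps_transport; auto|].
  intros [t Ht]; apply (orbit_reps_transport_back Ht).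
Qed.

Lemma orbit_sum_transport (w1 : T1 -> R) (w2 : T2 -> R) :
  (forall x, D1 x -> w2 (al x) = w1 x) ->
  (forall g y, K2 g -> D2 y -> w2 (a2 g y) = w2 y) ->
  orbit_sum a1 K1 D1 w1 = orbit_sum a2 K2 D2 w2.
Proof.
  intros Hw Hw2. destruct (classic (finitely_many_orbits a1 K1 D1)) as [h|h].
  - destruct (orbit_sum_exists_reps w1 h) as [s [Hs ->]].
    rewrite (orbit_sum_reps Ha2 HK2 w2 Hw2 (orbit_reps_transport Hs)), lsum_map.
    apply lsum_ext. intros x hx; symmetry; apply Hw, (proj1 Hs); auto.
  - unfold orbit_sum. destruct excluded_middle_informative; [tauto|].
    destruct excluded_middle_informative; auto.
    exfalso; apply h, finitely_many_orbits_transport; auto.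
Qed.
End Transport.

Section LinkCurvatureTransport.
Variables (G1 G2 : Group) (X1 X2 : cx2) (a1 : cxact G1 X1) (a2 : cxact G2 X2).
Variables (ang1 : CO X1 -> R) (ang2 : CO X2 -> R).
Variables (K1 : G1 -> Prop) (K2 : G2 -> Prop).
Variables (DV1 : NE X1 -> Prop) (DE1 : CO X1 -> Prop) (DV2 : NE X2 -> Prop) (DE2 : CO X2 -> Prop).
Variables (psi : G1 -> G2) (alN : NE X1 -> NE X2) (alC : CO X1 -> CO X2).
Hypotheses (HK2 : is_subgroup K2) (HaN : is_action (aN a2)) (HaC : is_action (aC a2)).
Hypotheses (psi_maps : forall g, K1 g -> K2 (psi g))
  (psi_onto : forall g2, K2 g2 -> exists g, K1 g /\ psi g = g2)
  (psi_inj : forall g h, K1 g -> K1 h -> psi g = psi h -> g = h).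
Hypotheses (DV1_inv : forall g x, K1 g -> DV1 x -> DV1 (aN a1 g x))
  (DE1_inv : forall g x, K1 g -> DE1 x -> DE1 (aC a1 g x)).
Hypotheses (alN_equiv : forall g x, K1 g -> DV1 x -> alN (aN a1 g x) = aN a2 (psi g) (alN x))
  (alC_equiv : forall g x, K1 g -> DE1 x -> alC (aC a1 g x) = aC a2 (psi g) (alC x)).
Hypotheses (alN_maps : forall x, DV1 x -> DV2 (alN x))
  (alN_onto : forall y, DV2 y -> exists x, DV1 x /\ alN x = y)
  (alN_inj : forall x y, DV1 x -> DV1 y -> alN x = alN y -> x = y).
Hypotheses (alC_maps : forall x, DE1 x -> DE2 (alC x))
  (alC_onto : forall y, DE2 y -> exists x, DE1 x /\ alC x = y)
  (alC_inj : forall x y, DE1 x -> DE1 y -> alC x = alC y -> x = y).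
Hypotheses (ang_transport : forall c, DE1 c -> ang2 (alC c) = ang1 c)
  (ang2_inv : forall g c, K2 g -> DE2 c -> ang2 (aC a2 g c) = ang2 c).

Lemma inv_card_stab_transport T1 T2 (b1 : G1 -> T1 -> T1) (b2 : G2 -> T2 -> T2)
    (D1 : T1 -> Prop) (al : T1 -> T2) :
  (forall g x, K1 g -> D1 x -> al (b1 g x) = b2 (psi g) (al x)) ->
  (forall x y, D1 x -> D1 y -> al x = al y -> x = y) ->
  (forall g x, K1 g -> D1 x -> D1 (b1 g x)) ->
  forall x, D1 x -> inv_card (stab b2 K2 (al x)) = inv_card (stab b1 K1 x).
Proof.
  intros equiv inj D_inv x Dx. symmetry; apply (inv_card_bij _ _ psi).
  - intros g [Kg E]; split; auto. rewrite <- equiv, E; auto.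
  - intros g2 [Kg2 E]. destruct (psi_onto Kg2) as [g [Kg <-]].
    exists g; split; [split|]; auto. apply inj; auto. rewrite equiv; auto.
  - intros g h [Kg _] [Kh _]; apply psi_inj; auto.
Qed.

Lemma kappa_link_transport : kappa_link a1 ang1 K1 DV1 DE1 = kappa_link a2 ang2 K2 DV2 DE2.
Proof.
  unfold kappa_link. f_equal; [f_equal|].
  - f_equal. apply (inv_card_bij _ _ psi); auto.
  - f_equal. apply (orbit_sum_transport _ _ _ _ _ psi alN); auto.
    + intros x Dx. f_equal. eapply inv_card_stab_transport; eauto.
    + intros g y Kg Dy. f_equal. apply inv_card_stab_act; auto.
  - apply (orbit_sum_transport _ _ _ _ _ psi alC); auto.
    + intros x Dx. rewrite ang_transport; auto. f_equal. eapply inv_card_stab_transport; eauto.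
    + intros g y Kg Dy. rewrite ang2_inv; auto. f_equal. apply inv_card_stab_act; auto.
Qed.
End LinkCurvatureTransport.

Section Fibres.
Variables (H : Group) (TA TB : Type) (aA : H -> TA -> TA) (aB : H -> TB -> TB) (pi : TA -> TB).
Hypotheses (HA : is_action aA) (HB : is_action aB)
  (pi_equiv : forall h x, pi (aA h x) = aB h (pi x)).

Lemma NoDup_concat_fibres (sB : list TB) (S : TB -> list TA) :
  NoDup sB -> (forall b, In b sB -> NoDup (S b)) ->
  (forall b x, In b sB -> In x (S b) -> pi x = b) ->
  NoDup (concat (map S sB)).
Proof.
  induction sB as [|b sB IH]; simpl; intros Hn HS Hp; [constructor|].
  inversion Hn; subst. apply NoDup_app; auto.
  intros x hx hx'. apply in_concat in hx'. destruct hx' as [l [hl hxl]].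
  apply in_map_iff in hl; destruct hl as [b' [<- hb']].
  assert (pi x = b) by (apply Hp; auto). assert (pi x = b') by (apply Hp; auto).
  subst; congruence.
Qed.

Lemma orbit_sum_fibres (sB : list TB) (w : TA -> R) :
  orbit_reps aB (@allG H) (fun _ => True) sB ->
  (forall b, finitely_many_orbits aA (stab aB (@allG H) b) (fun x => pi x = b)) ->
  (forall h x, w (aA h x) = w x) ->
  orbit_sum aA (@allG H) (fun _ => True) w =
  lsum (fun b => orbit_sum aA (stab aB (@allG H) b) (fun x => pi x = b) w) sB.
Proof.
  intros [_ [sC [sN sU]]] Hf Hw.
  assert (HS : forall b, exists s, orbit_reps aA (stab aB (@allG H) b) (fun x => pi x = b) s /\
     orbit_sum aA (stab aB (@allG H) b) (fun x => pi x = b) w = lsum w s)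
    by (intro b; apply orbit_sum_exists_reps; auto).
  destruct (choice _ HS) as [S HS'].
  rewrite (lsum_ext _ (fun b => lsum w (S b))) by (intros b _; apply HS').
  rewrite <- (lsum_map S (lsum w)), <- lsum_concat.
  apply (orbit_sum_reps HA (allG_subgroup H)); [intros; apply Hw|]. repeat split.
  - intros x _. destruct (sC (pi x) I) as [b [hb [h [_ E]]]].
    destruct (HS' b) as [[_ [C _]] _].
    destruct (C (aA (ginv h) x)) as [y [hy [k [[_ Ek] Ey]]]]; [rewrite pi_equiv, <- E, actK; auto|].
    exists y; split; [apply in_concat; exists (S b); split; auto; apply in_map; auto|].
    exists (gmul h k); split; [exact I|]. rewrite actM, Ey, actKV; auto.
  - apply NoDup_concat_fibres; auto; intros b; [intros _|intros x _ hx]; apply (HS' b); auto.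
  - intros y z hy hz [h [_ E]].
    apply in_concat in hy; destruct hy as [l [hl hy]]; apply in_map_iff in hl; destruct hl as [b [<- hb]].
    apply in_concat in hz; destruct hz as [l [hl hz]]; apply in_map_iff in hl; destruct hl as [b' [<- hb']].
    destruct (HS' b) as [[D1 [_ [_ U1]]] _], (HS' b') as [[D2 _] _].
    assert (pi_y : pi y = b) by auto. assert (pi_z : pi z = b') by auto.
    assert (Eb : b = b').
    { apply sU; auto. exists h; split; [exact I|]. rewrite <- pi_y, <- pi_z, <- E, pi_equiv; auto. }
    rewrite <- Eb in hz. apply U1; auto. exists h; split; [split; [exact I|]|exact E].
    rewrite <- pi_y at 1. rewrite <- pi_equiv, E; auto.
Qed.
End Fibres.

Lemma orbit_count_reps (H : Group) T (b : H -> T -> T) (P : T -> Prop) s :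
  is_action b -> orbit_reps b (@allG H) (fun _ => True) s -> (forall g x, P (b g x) <-> P x) ->
  orbit_count b (@allG H) P = lsum (fun x => indicator (P x)) s.
Proof.
  intros Hb [_ [sC [sN sU]]] HP. set (t := filter (fun x => decide (P x)) s).
  assert (Ht : forall x, In x t <-> In x s /\ P x)
    by (intro x; unfold t; rewrite filter_In, decide_spec; tauto).
  unfold orbit_count. rewrite lsum_indicator_filter; fold t.
  replace (INR (length t)) with (lsum (fun _ => 1) t) by (rewrite lsum_const; lra).
  apply (orbit_sum_reps Hb (allG_subgroup H)); auto. repeat split.
  - intros x hx; apply Ht; auto.
  - intros x Px. destruct (sC x I) as [y [hy [g [_ Eg]]]].
    exists y; split; [apply Ht; split; auto|exists g; split; auto; exact I].
    rewrite <- Eg in Px; apply HP in Px; auto.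
  - apply NoDup_filter; auto.
  - intros y z hy hz; apply sU; apply Ht; auto.
Qed.

(** * Complexes and G-complexes *)

Section Complex.
Variable X : cx2.
Hypothesis HX : is_cx2 X.

Lemma opp_neq n : @Defs.opp X n <> n. Proof. apply HX. Qed.
Lemma en_edge_opp n : en_edge (@Defs.opp X n) = en_edge n. Proof. apply HX. Qed.
Lemma edge_has_end (e : Defs.E1 X) : exists n, en_edge n = e. Proof. apply HX. Qed.
Lemma same_edge_ends n m : en_edge n = en_edge m -> m = n \/ m = @Defs.opp X n. Proof. apply HX. Qed.
Lemma corner_ends_vert (c : CO X) : en_vert (cend1 c) = en_vert (cend2 c). Proof. apply HX. Qed.
Lemma cface_nxt c : cface (@Defs.nxt X c) = cface c. Proof. apply HX. Qed.

Lemma cface_iter k c : cface (Nat.iter k (@Defs.nxt X) c) = cface c.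
Proof. induction k; simpl; auto. rewrite cface_nxt; auto. Qed.

Lemma face_cycle f : exists c0 (n : nat), (0 < n)%nat /\ Nat.iter n (@Defs.nxt X) c0 = c0 /\
  (forall c, cface c = f <-> exists k, (k < n)%nat /\ c = Nat.iter k (@Defs.nxt X) c0) /\
  (forall k l, (k < n)%nat -> (l < n)%nat ->
     Nat.iter k (@Defs.nxt X) c0 = Nat.iter l (@Defs.nxt X) c0 -> k = l).
Proof. apply HX. Qed.

Lemma face_corners_enum f : exists l, enumerates (fun c : CO X => cface c = f) l.
Proof.
  destruct (face_cycle f) as [c0 [n [_ [_ [Hc Hi]]]]].
  exists (map (fun k => Nat.iter k (@Defs.nxt X) c0) (seq 0 n)). split.
  - apply FinFun.Injective_map_NoDup_in; [|apply seq_NoDup].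
    intros k l hk hl. apply in_seq in hk, hl. apply Hi; lia.
  - intro c. rewrite Hc, in_map_iff. split.
    + intros [k [hk ->]]. exists k; split; auto. apply in_seq; lia.
    + intros [k [<- hk]]. apply in_seq in hk. exists k; split; auto; lia.
Qed.

Lemma nxt_onto c : exists c', cface c' = cface c /\ @Defs.nxt X c' = c.
Proof.
  destruct (face_cycle (cface c)) as [c0 [n [n0 [cyc [Hc _]]]]].
  destruct (proj1 (Hc c) eq_refl) as [k [hk ->]].
  exists (Nat.iter (k + (n - 1)) (@Defs.nxt X) c0). split; [rewrite !cface_iter; auto|].
  change (Nat.iter (S (k + (n - 1))) (@Defs.nxt X) c0 = Nat.iter k (@Defs.nxt X) c0).
  replace (S (k + (n - 1))) with (k + n)%nat by lia. rewrite Nat.iter_add, cyc; auto.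
Qed.
End Complex.

Section CombinatorialMap.
Variables (Y X : cx2) (m : cmap Y X).
Hypotheses (HY : is_cx2 Y) (HX : is_cx2 X) (Hm : is_cmap m).

Lemma cmap_cvert c : mV m (cvert c) = cvert (mC m c).
Proof.
  destruct Hm as [_ [HV [_ [_ [Hor _]]]]]. unfold cvert.
  destruct (Hor (cface c)) as [h|h]; destruct (h c eq_refl) as [_ [E1 E2]]; rewrite E1, HV; auto.
  rewrite <- !HV; f_equal; apply corner_ends_vert; auto.
Qed.

Lemma cmap_cends c :
  (cend1 (mC m c) = mN m (cend1 c) \/ cend1 (mC m c) = mN m (cend2 c)) /\
  (cend2 (mC m c) = mN m (cend1 c) \/ cend2 (mC m c) = mN m (cend2 c)).
Proof.
  destruct Hm as [_ [_ [_ [_ [Hor _]]]]].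
  destruct (Hor (cface c)) as [h|h]; destruct (h c eq_refl) as [_ [E1 E2]]; rewrite E1, E2; auto.
Qed.

Lemma cmap_face_image_nxt f d : (exists c, cface c = f /\ mC m c = d) ->
  exists c, cface c = f /\ mC m c = @Defs.nxt X d.
Proof.
  destruct Hm as [_ [_ [_ [_ [Hor _]]]]]. intros [c [fc <-]].
  destruct (Hor f) as [h|h].
  - exists (@Defs.nxt Y c). split; [rewrite cface_nxt; auto|]. apply h; auto.
  - destruct (nxt_onto HY c) as [c' [fc' <-]]. exists c'. split; [congruence|].
    symmetry; apply h; congruence.
Qed.

Lemma cmap_face_onto f d : cface d = mF m f -> exists c, cface c = f /\ mC m c = d.
Proof.
  intros fd. destruct (face_cycle HY f) as [c0 [n [n0 [_ [Hc _]]]]].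
  assert (fc0 : cface c0 = f) by (apply Hc; exists 0%nat; split; [lia|auto]).
  assert (image_iter : forall k, exists c, cface c = f /\ mC m c = Nat.iter k (@Defs.nxt X) (mC m c0)).
  { induction k; [exists c0; auto|]. apply cmap_face_image_nxt; auto. }
  destruct (face_cycle HX (mF m f)) as [d0 [p [_ [cyc [Hd _]]]]].
  assert (fm : cface (mC m c0) = mF m f) by (destruct Hm as [_ [_ [_ [HF _]]]]; rewrite <- HF; congruence).
  destruct (proj1 (Hd _) fm) as [j [hj Ej]], (proj1 (Hd _) fd) as [l [hl ->]].
  destruct (image_iter (p - j + l)%nat) as [c [fc E]]. exists c; split; auto.
  rewrite E, Ej, <- Nat.iter_add. replace (p - j + l + j)%nat with (l + p)%nat by lia.
  rewrite Nat.iter_add, cyc; auto.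
Qed.

Lemma kappa_face_cmap (ang : CO X -> R) f :
  kappa_face (fun c => ang (mC m c)) f = kappa_face ang (mF m f).
Proof.
  pose proof Hm as [_ [_ [_ [HF [_ Hinj]]]]].
  assert (maps : forall c, cface c = f -> cface (mC m c) = mF m f) by (intros c <-; auto).
  assert (inj : forall c c', cface c = f -> cface c' = f -> mC m c = mC m c' -> c = c')
    by (intros; apply Hinj; congruence).
  unfold kappa_face, bdlen.
  rewrite (fin_sum_bij _ _ (mC m) maps (cmap_face_onto f) inj ang),
    (fin_card_bij _ _ (mC m) maps (cmap_face_onto f) inj); auto.
Qed.
End CombinatorialMap.

Section GComplex.
Variables (G : Group) (X : cx2) (a : cxact G X).
Hypothesis Ha : is_Gcomplex a.

Lemma Gcomplex_cx2 : is_cx2 X. Proof. apply Ha. Qed.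
Lemma actV_action : is_action (aV a). Proof. apply Ha. Qed.
Lemma actE_action : is_action (aE a). Proof. apply Ha. Qed.
Lemma actF_action : is_action (aF a). Proof. apply Ha. Qed.
Lemma actN_action : is_action (aN a). Proof. apply Ha. Qed.
Lemma actC_action : is_action (aC a). Proof. apply Ha. Qed.
Lemma act_cmap g : is_cmap (act_map a g). Proof. apply Ha. Qed.

Lemma act_no_inversion g e : aE a g e = e -> forall n, en_edge n = e -> aN a g n = n.
Proof. apply Ha. Qed.

Lemma en_vert_act g n : en_vert (aN a g n) = aV a g (en_vert n).
Proof. symmetry; apply (act_cmap g). Qed.
Lemma en_edge_act g n : en_edge (aN a g n) = aE a g (en_edge n).
Proof. symmetry; apply (act_cmap g). Qed.
Lemma cface_act g c : cface (aC a g c) = aF a g (cface c).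
Proof. symmetry; apply (act_cmap g). Qed.
Lemma opp_act g n : aN a g (Defs.opp n) = Defs.opp (aN a g n).
Proof. apply (act_cmap g). Qed.
Lemma cvert_act g c : cvert (aC a g c) = aV a g (cvert c).
Proof. symmetry; apply (cmap_cvert Gcomplex_cx2 (act_cmap g)). Qed.

(* The elements carrying [v] to [x0] form a right coset of the stabiliser of [x0]. *)
Lemma transporters_in_coset x0 GL : enumerates (stab (aV a) (@allG G) x0) GL ->
  forall v, exists gv, forall g, aV a g v = x0 -> exists s, In s GL /\ g = gmul s gv.
Proof.
  intros [_ HGL] v. set (gv := epsilon (inhabits (@gone G)) (fun g => aV a g v = x0)).
  exists gv. intros g Hg. assert (Hv : aV a gv v = x0) by (apply epsilon_spec; eauto).
  exists (gmul g (ginv gv)). split.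
  - apply HGL. split; [exact I|]. rewrite (actM actV_action), <- Hv at 1.
    rewrite (actK actV_action); auto.
  - rewrite <- gmulA, gmulVl, gmul1r; auto.
Qed.

Hypotheses (Hp : proper_action a) (Hc : cocompact a).

Lemma ends_at_listed x0 : exists l, forall n : NE X, en_vert n = x0 -> In n l.
Proof.
  destruct (proj1 Hp x0) as [GL HGL].
  destruct (choice _ (transporters_in_coset HGL)) as [gv Hgv].
  destruct (proj1 (proj2 Hc)) as [sE [_ [sEC _]]].
  destruct (choice _ (edge_has_end Gcomplex_cx2)) as [ne Hne].
  set (M := flat_map (fun e => ne e :: Defs.opp (ne e) :: nil) sE).
  exists (flat_map (fun m => map (fun s => aN a (gmul s (gv (en_vert m))) m) GL) M).
  intros n Hn. destruct (sEC (en_edge n) I) as [e [he [g [_ Eg]]]].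
  assert (Hm : exists m, In m M /\ n = aN a g m).
  { assert (Ee : en_edge (aN a g (ne e)) = en_edge n) by (rewrite en_edge_act, Hne; auto).
    destruct (same_edge_ends Gcomplex_cx2 _ _ Ee) as [->| ->].
    - exists (ne e); split; auto. apply in_flat_map; exists e; simpl; auto.
    - exists (Defs.opp (ne e)); split; [apply in_flat_map; exists e; simpl; auto|].
      rewrite opp_act; auto. }
  destruct Hm as [m [hm ->]]. rewrite en_vert_act in Hn.
  destruct (Hgv _ g Hn) as [s [hs ->]].
  apply in_flat_map; exists m; split; auto. apply in_map_iff; exists s; split; auto.
Qed.

Lemma corners_at_listed x0 : exists l, forall c : CO X, cvert c = x0 -> In c l.
Proof.
  destruct (proj1 Hp x0) as [GL HGL].
  destruct (choice _ (transporters_in_coset HGL)) as [gv Hgv].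
  destruct (proj2 (proj2 Hc)) as [sF [_ [sFC _]]].
  destruct (choice _ (face_corners_enum Gcomplex_cx2)) as [CF HCF].
  set (M := flat_map CF sF).
  exists (flat_map (fun m => map (fun s => aC a (gmul s (gv (cvert m))) m) GL) M).
  intros c Hcv. destruct (sFC (cface c) I) as [f [hf [g [_ Eg]]]].
  set (m := aC a (ginv g) c).
  assert (hm : In m M).
  { apply in_flat_map; exists f; split; auto. apply HCF.
    unfold m. rewrite cface_act, <- Eg, (actK actF_action); auto. }
  assert (Ec : c = aC a g m) by (unfold m; rewrite (actKV actC_action); auto).
  rewrite Ec in Hcv |- *. rewrite cvert_act in Hcv.
  destruct (Hgv _ g Hcv) as [s [hs Es]]. rewrite Es at 1.
  apply in_flat_map; exists m; split; auto. apply in_map_iff; exists s; split; auto.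
Qed.
End GComplex.

(** * The constants B_- and B_+ *)

Fixpoint sublists {A} (l : list A) : list (list A) :=
  match l with
  | nil => nil :: nil
  | a :: l' => sublists l' ++ map (cons a) (sublists l')
  end.

Lemma sublists_complete A (l : list A) : forall P : A -> Prop, (forall x, P x -> In x l) ->
  exists t, In t (sublists l) /\ P = (fun x => In x t).
Proof.
  induction l as [|a l IH]; intros P HP.
  - exists nil; split; simpl; auto. apply pred_ext; intro x; split; [apply HP|simpl; tauto].
  - destruct (IH (fun x => P x /\ x <> a)) as [t [ht Et]].
    { intros x [px nx]. destruct (HP x px); auto. congruence. }
    assert (Ht : forall x, In x t <-> P x /\ x <> a)
      by (intro x; assert (h := equal_f Et x); simpl in h; rewrite h; tauto).
    destruct (classic (P a)) as [Pa|Pa].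
    + exists (a :: t). split; [simpl; apply in_or_app; right; apply in_map; auto|].
      apply pred_ext; intro x; simpl; rewrite Ht.
      split; [intro px; destruct (classic (a = x)); [left|right; split]; auto|].
      intros [<-|[px _]]; auto.
    + exists t. split; [simpl; apply in_or_app; left; auto|].
      apply pred_ext; intro x; rewrite Ht. split; [|tauto]. intro px; split; auto. intros ->; tauto.
Qed.

Lemma finite_set_has_max (L : list R) : forall S : R -> Prop, (forall r, S r -> In r L) ->
  (exists r, S r) -> exists b, S b /\ forall r, S r -> r <= b.
Proof.
  induction L as [|a L IH]; intros S HS [r0 Sr0]; [destruct (HS r0 Sr0)|].
  destruct (classic (exists r, S r /\ r <> a)) as [ne|ne].
  - destruct (IH (fun r => S r /\ r <> a)) as [b [[Sb _] Hb]]; auto.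
    { intros r [Sr nr]. destruct (HS r Sr); auto. congruence. }
    destruct (classic (S a)) as [Sa|Sa].
    + exists (Rmax a b). split; [unfold Rmax; destruct Rle_dec; auto|].
      intros r Sr. destruct (Req_dec r a) as [->|nr]; [apply Rmax_l|].
      eapply Rle_trans; [apply Hb; auto|apply Rmax_r].
    + exists b; split; auto. intros r Sr. apply Hb; split; auto. intros ->; tauto.
  - exists r0. split; auto. intros r Sr.
    assert (r = a) by (apply NNPP; intro; apply ne; exists r; auto).
    assert (r0 = a) by (apply NNPP; intro; apply ne; exists r0; auto). lra.
Qed.

Section SectionValues.
Variables (G : Group) (X : cx2) (a : cxact G X) (ang : CO X -> R).
Hypotheses (Ha : is_Gcomplex a) (Hang : angle_invariant a ang).

Lemma kappa_link_translate x K DV DE g : is_subgroup K -> is_section a x K DV DE ->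
  kappa_link a ang (fun k => K (gmul g (gmul k (ginv g))))
    (fun n => DV (aN a g n)) (fun c => DE (aC a g c))
  = kappa_link a ang K DV DE.
Proof.
  intros HK [_ [_ [_ [DV_inv [DE_inv _]]]]].
  pose proof (actN_action Ha) as HN. pose proof (actC_action Ha) as HC.
  apply (kappa_link_transport a a ang ang _ _ _ _ _ (fun k => gmul g (gmul k (ginv g)))
    (aN a g) (aC a g)); auto.
  - intros g2 K2. exists (gmul (ginv g) (gmul g2 g)). rewrite conjKV; auto.
  - intros k h _ _; apply conj_inj.
  - intros k n Kk Dn. rewrite (act_conj HN); auto.
  - intros k n Kk Dn. rewrite (act_conj HC); auto.
  - intros k n _ _. apply (act_conj HN).
  - intros k n _ _. apply (act_conj HC).
  - intros m Dm. exists (aN a (ginv g) m). rewrite (actKV HN); auto.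
  - intros n n' _ _. apply (act_inj HN).
  - intros m Dm. exists (aC a (ginv g) m). rewrite (actKV HC); auto.
  - intros n n' _ _. apply (act_inj HC).
Qed.

Hypotheses (Hp : proper_action a) (Hc : cocompact a).

(* Up to translation, a section lives at one of finitely many orbit representatives [x0],
   and its group and its vertex and edge sets are subsets of finite sets attached to [x0]. *)
Lemma section_values_listed : exists L, forall r, section_value a ang r -> In r L.
Proof.
  destruct (proj1 Hc) as [sV [_ [sVC _]]].
  destruct (choice _ (fun x0 => proj1 Hp x0)) as [GL HGL].
  destruct (choice _ (ends_at_listed Ha Hp Hc)) as [EN HEN].
  destruct (choice _ (corners_at_listed Ha Hp Hc)) as [CN HCN].
  exists (flat_map (fun x0 => flat_map (fun kl => flat_map (fun nl => map (fun cl =>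
     kappa_link a ang (fun g => In g kl) (fun n => In n nl) (fun c => In c cl))
     (sublists (CN x0))) (sublists (EN x0))) (sublists (GL x0))) sV).
  intros r [x [K [DV [DE [HK [Kx [Hs ->]]]]]]].
  destruct (sVC x I) as [x0 [hx0 [g [_ Eg]]]].
  pose proof (actV_action Ha) as HV.
  rewrite <- (kappa_link_translate g HK Hs). pose proof Hs as [DVx [DEx _]].
  destruct (sublists_complete (GL x0) (fun k => K (gmul g (gmul k (ginv g))))) as [kl [hkl ->]].
  { intros k Kk. apply (HGL x0). split; [exact I|]. specialize (Kx _ Kk).
    rewrite <- Eg, <- (act_conj HV) in Kx. apply (act_inj HV) in Kx; auto. }
  destruct (sublists_complete (EN x0) (fun n => DV (aN a g n))) as [nl [hnl ->]].
  { intros n Dn. apply HEN. specialize (DVx _ Dn). rewrite (en_vert_act Ha), <- Eg in DVx.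
    apply (act_inj HV) in DVx; auto. }
  destruct (sublists_complete (CN x0) (fun c => DE (aC a g c))) as [cl [hcl ->]].
  { intros c Dc. apply HCN. specialize (DEx _ Dc). rewrite (cvert_act Ha), <- Eg in DEx.
    apply (act_inj HV) in DEx; auto. }
  apply in_flat_map; exists x0; split; auto. apply in_flat_map; exists kl; split; auto.
  apply in_flat_map; exists nl; split; auto. apply in_map_iff; exists cl; split; auto.
Qed.

Lemma B_minus_spec : B_minus a ang < 0 /\
  forall r, section_value a ang r -> r < 0 -> r <= B_minus a ang.
Proof.
  destruct section_values_listed as [L HL]. unfold B_minus.
  destruct excluded_middle_informative as [h|h].
  - assert (Hm := finite_set_has_max L (fun r => section_value a ang r /\ r < 0)
      (fun r hr => HL r (proj1 hr)) h).
    pose proof (epsilon_spec (inhabits 0) _ Hm) as [[_ neg] Hb]. split; auto.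
  - split; [lra|]. intros r s n. exfalso; apply h; exists r; auto.
Qed.

Lemma B_plus_spec r : section_value a ang r -> 0 <= r -> r <= B_plus a ang.
Proof.
  destruct section_values_listed as [L HL]. unfold B_plus.
  destruct excluded_middle_informative as [h|h].
  - assert (Hm := finite_set_has_max L (fun r => section_value a ang r /\ 0 <= r)
      (fun r hr => HL r (proj1 hr)) h).
    pose proof (epsilon_spec (inhabits 0) _ Hm) as [_ Hb]. intros; apply Hb; auto.
  - intros s n. exfalso; apply h; exists r; auto.
Qed.
End SectionValues.

(** * Gauss-Bonnet *)

Section GaussBonnet.
Variables (H : Group) (Y : cx2) (aY : cxact H Y) (angY : CO Y -> R).
Hypotheses (HY : is_Gcomplex aY) (HcY : cocompact aY) (Hang : angle_invariant aY angY)
  (ends_finite : forall y, is_finite (fun n : NE Y => en_vert n = y))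
  (corners_finite : forall y, is_finite (fun c : CO Y => cvert c = y))
  (face_stab_finite : forall f, is_finite (stab (aF aY) (@allG H) f)).

Let HV := actV_action HY.
Let HE := actE_action HY.
Let HF := actF_action HY.
Let HN := actN_action HY.
Let HC := actC_action HY.
Let HYcx := Gcomplex_cx2 HY.
Let Hall := allG_subgroup H.
Notation stabH b x := (stab b (@allG H) x).

Lemma vertex_link_section y :
  is_section aY y (stabH (aV aY) y) (fun n => en_vert n = y) (fun c => cvert c = y).
Proof.
  assert (HK := stab_subgroup HV y Hall).
  split; [|split; [|split; [|split; [|split; [|split]]]]]; auto.
  - intros c <-. split; [reflexivity|]. unfold cvert; symmetry; apply corner_ends_vert; auto.
  - intros g n [_ E] <-. rewrite en_vert_act; auto.
  - intros g c [_ E] <-. rewrite cvert_act; auto.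
  - apply finitely_many_orbits_of_finite; auto.
  - apply finitely_many_orbits_of_finite; auto.
Qed.

Lemma kappa_vertex_act h y : kappa_vertex aY angY (aV aY h y) = kappa_vertex aY angY y.
Proof.
  unfold kappa_vertex.
  rewrite <- (kappa_link_translate HY Hang h (stab_subgroup HV _ Hall)
    (vertex_link_section (aV aY h y))).
  f_equal; apply pred_ext.
  - intro k. rewrite stab_allG_conj, conjK by auto. reflexivity.
  - intro n. rewrite en_vert_act by auto. split; [apply act_inj; auto|intros ->; auto].
  - intro c. rewrite cvert_act by auto. split; [apply act_inj; auto|intros ->; auto].
Qed.

Definition end_weight (n : NE Y) : R := PI * inv_card (stabH (aN aY) n).
Definition corner_weight (c : CO Y) : R := (PI - angY c) * inv_card (stabH (aC aY) c).

Lemma end_weight_act h n : end_weight (aN aY h n) = end_weight n.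
Proof. unfold end_weight. rewrite inv_card_stab_allG_act; auto. Qed.

Lemma corner_weight_act h c : corner_weight (aC aY h c) = corner_weight c.
Proof. unfold corner_weight. rewrite inv_card_stab_allG_act, Hang; auto. Qed.

Lemma stab_in_stab {T U} {b : H -> T -> T} {bU : H -> U -> U} {pi : T -> U} {x u} :
  (forall g x, pi (b g x) = bU g (pi x)) -> pi x = u ->
  stab b (stabH bU u) x = stabH b x.
Proof.
  intros pi_equiv <-. apply pred_ext; intro g; unfold stab, allG.
  split; [tauto|]. intros [_ E]; repeat split; auto. rewrite <- pi_equiv, E; auto.
Qed.

Lemma kappa_vertex_split v : kappa_vertex aY angY v =
  2 * PI * inv_card (stabH (aV aY) v)
  - orbit_sum (aN aY) (stabH (aV aY) v) (fun n => en_vert n = v) end_weight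
  + orbit_sum (aC aY) (stabH (aV aY) v) (fun c => cvert c = v) corner_weight.
Proof.
  unfold kappa_vertex, kappa_link. f_equal; [f_equal|]; apply orbit_sum_ext.
  - intros n En. unfold end_weight. rewrite (stab_in_stab (en_vert_act HY) En); auto.
  - intros c Ec. unfold corner_weight. rewrite (stab_in_stab (cvert_act HY) Ec); auto.
Qed.

Lemma end_orbits_at_vertices sV : orbit_reps (aV aY) (@allG H) (fun _ => True) sV ->
  lsum (fun v => orbit_sum (aN aY) (stabH (aV aY) v) (fun n => en_vert n = v) end_weight) sV =
  orbit_sum (aN aY) (@allG H) (fun _ => True) end_weight.
Proof.
  intros hV. symmetry. apply (orbit_sum_fibres (@en_vert Y) HN HV (en_vert_act HY) end_weight hV).
  - intro b. apply finitely_many_orbits_of_finite; auto. apply stab_subgroup; auto.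
  - apply end_weight_act.
Qed.

Lemma corner_orbits_at_vertices sV : orbit_reps (aV aY) (@allG H) (fun _ => True) sV ->
  lsum (fun v => orbit_sum (aC aY) (stabH (aV aY) v) (fun c => cvert c = v) corner_weight) sV =
  orbit_sum (aC aY) (@allG H) (fun _ => True) corner_weight.
Proof.
  intros hV. symmetry. apply (orbit_sum_fibres (@cvert Y) HC HV (cvert_act HY) corner_weight hV).
  - intro b. apply finitely_many_orbits_of_finite; auto. apply stab_subgroup; auto.
  - apply corner_weight_act.
Qed.

(* Since there are no inversions, the two ends of [e] lie in distinct orbits of the stabiliser of [e]. *)
Lemma end_orbits_of_edge e n : en_edge n = e ->
  orbit_reps (aN aY) (stabH (aE aY) e) (fun m => en_edge m = e) (n :: Defs.opp n :: nil).
Proof.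
  intros En. assert (HK := stab_subgroup HE e Hall).
  assert (Eo : en_edge (Defs.opp n) = e) by (rewrite en_edge_opp; auto).
  assert (fixes : forall g m, stabH (aE aY) e g -> en_edge m = e -> aN aY g m = m)
    by (intros g m [_ Eg] Em; apply (act_no_inversion HY g Eg); auto).
  repeat split.
  - intros m [<-|[<-|[]]]; auto.
  - intros m Em. rewrite <- En in Em. symmetry in Em.
    destruct (same_edge_ends HYcx _ _ Em) as [->| ->]; [exists n|exists (Defs.opp n)];
      split; simpl; auto; apply orbit_refl; auto.
  - constructor; [intros [E|[]]; apply (opp_neq HYcx E)|constructor; auto; constructor].
  - intros m m' [<-|[<-|[]]] [<-|[<-|[]]] [g [Kg Eg]]; auto; exfalso;
      rewrite fixes in Eg; auto; eapply opp_neq; eauto.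
Qed.

Lemma end_orbits_at_edges sE : orbit_reps (aE aY) (@allG H) (fun _ => True) sE ->
  orbit_sum (aN aY) (@allG H) (fun _ => True) end_weight =
  lsum (fun e => 2 * PI * inv_card (stabH (aE aY) e)) sE.
Proof.
  intros hE. rewrite (orbit_sum_fibres (@en_edge Y) HN HE (en_edge_act HY) end_weight hE).
  - apply lsum_ext. intros e _. destruct (edge_has_end HYcx e) as [n En].
    assert (stab_end : forall m, en_edge m = e -> end_weight m = PI * inv_card (stabH (aE aY) e)).
    { intros m Em. unfold end_weight. f_equal. f_equal. apply pred_ext; intro g; unfold stab, allG.
      split; intros [_ E]; split; auto; [rewrite <- Em, <- en_edge_act, E|]; auto.
      apply (act_no_inversion HY g E); auto. }
    assert (inv : forall g m, stabH (aE aY) e g -> en_edge m = e -> end_weight (aN aY g m) = end_weight m).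
    { intros g m [_ Eg] Em. rewrite !stab_end; auto. rewrite en_edge_act, Em; auto. }
    rewrite (orbit_sum_reps HN (stab_subgroup HE e Hall) end_weight inv (@end_orbits_of_edge e n En)).
    simpl. rewrite !stab_end; auto; [lra|]. rewrite en_edge_opp; auto.
  - intro b. apply finitely_many_orbits_of_finite; auto; [apply stab_subgroup; auto|].
    destruct (edge_has_end HYcx b) as [n En]. apply (finite_of_incl_list (n :: Defs.opp n :: nil)).
    intros m Em. rewrite <- En in Em. symmetry in Em.
    destruct (same_edge_ends HYcx _ _ Em) as [->| ->]; simpl; auto.
  - apply end_weight_act.
Qed.

Lemma corner_orbits_of_face f :
  orbit_sum (aC aY) (stabH (aF aY) f) (fun c => cface c = f) corner_weight =
  (2 * PI - kappa_face angY f) * inv_card (stabH (aF aY) f).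
Proof.
  assert (HK := stab_subgroup HF f Hall).
  destruct (face_corners_enum HYcx f) as [lD HlD], (face_stab_finite f) as [lK HlK].
  rewrite (@orbit_sum_ext _ _ _ _ _ corner_weight
    (fun c => (PI - angY c) * inv_card (stab (aC aY) (stabH (aF aY) f) c))).
  - rewrite (orbit_sum_inv_card_stab (fun c => PI - angY c) HC HK HlK HlD).
    + f_equal. unfold kappa_face, bdlen, fin_card. rewrite !(fin_sum_enum _ HlD).
      rewrite (lsum_ext (fun c => PI - angY c) (fun c => PI + - angY c)) by (intros; lra).
      rewrite lsum_add, lsum_const, lsum_opp, lsum_const. lra.
    + intros g c [_ Eg] Ec. rewrite cface_act, Ec; auto.
    + intros g c _ _. rewrite Hang; auto.
  - intros c Ec. unfold corner_weight. rewrite (stab_in_stab (cface_act HY) Ec); auto.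
Qed.

Lemma corner_orbits_at_faces sF : orbit_reps (aF aY) (@allG H) (fun _ => True) sF ->
  orbit_sum (aC aY) (@allG H) (fun _ => True) corner_weight =
  lsum (fun f => (2 * PI - kappa_face angY f) * inv_card (stabH (aF aY) f)) sF.
Proof.
  intros hF. rewrite (orbit_sum_fibres (@cface Y) HC HF (cface_act HY) corner_weight hF).
  - apply lsum_ext; intros f _; apply corner_orbits_of_face.
  - intro b. apply finitely_many_orbits_of_finite; auto; [apply stab_subgroup; auto|].
    destruct (face_corners_enum HYcx b) as [l Hl]; exists l; auto.
  - apply corner_weight_act.
Qed.

Lemma chi_reps sV sE sF : orbit_reps (aV aY) (@allG H) (fun _ => True) sV ->
  orbit_reps (aE aY) (@allG H) (fun _ => True) sE ->
  orbit_reps (aF aY) (@allG H) (fun _ => True) sF ->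
  chi aY = lsum (fun x => inv_card (stabH (aV aY) x)) sV
         - lsum (fun x => inv_card (stabH (aE aY) x)) sE
         + lsum (fun x => inv_card (stabH (aF aY) x)) sF.
Proof.
  intros hV hE hF. unfold chi.
  rewrite (orbit_sum_reps HV Hall _ (fun g x _ _ => inv_card_stab_allG_act HV g x) hV),
    (orbit_sum_reps HE Hall _ (fun g x _ _ => inv_card_stab_allG_act HE g x) hE),
    (orbit_sum_reps HF Hall _ (fun g x _ _ => inv_card_stab_allG_act HF g x) hF).
  reflexivity.
Qed.

(* Each end contributes [pi] to the curvature of its vertex, and each corner [pi - angle]
   to that of its vertex; regrouping by edges and faces instead gives [chi]. *)
Theorem gauss_bonnet sV sF : orbit_reps (aV aY) (@allG H) (fun _ => True) sV ->
  orbit_reps (aF aY) (@allG H) (fun _ => True) sF ->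
  2 * PI * chi aY =
  lsum (kappa_vertex aY angY) sV + lsum (fun f => kappa_face angY f * inv_card (stabH (aF aY) f)) sF.
Proof.
  intros hV hF. destruct HcY as [_ [[sE hE] _]].
  assert (vertices : lsum (kappa_vertex aY angY) sV =
    2 * PI * lsum (fun v => inv_card (stabH (aV aY) v)) sV
    - lsum (fun v => orbit_sum (aN aY) (stabH (aV aY) v) (fun n => en_vert n = v) end_weight) sV
    + lsum (fun v => orbit_sum (aC aY) (stabH (aV aY) v) (fun c => cvert c = v) corner_weight) sV).
  { unfold Rminus; rewrite <- lsum_scal, <- lsum_opp, <- !lsum_add.
    apply lsum_ext; intros v _; rewrite kappa_vertex_split; lra. }
  assert (faces : lsum (fun f => (2 * PI - kappa_face angY f) * inv_card (stabH (aF aY) f)) sF =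
    2 * PI * lsum (fun f => inv_card (stabH (aF aY) f)) sF
    - lsum (fun f => kappa_face angY f * inv_card (stabH (aF aY) f)) sF).
  { unfold Rminus; rewrite <- lsum_scal, <- lsum_opp, <- lsum_add. apply lsum_ext; intros; lra. }
  rewrite (chi_reps hV hE hF), vertices, (end_orbits_at_vertices hV),
    (corner_orbits_at_vertices hV), (end_orbits_at_edges hE), (corner_orbits_at_faces hF),
    faces, lsum_scal.
  lra.
Qed.
End GaussBonnet.

(** * Immersions *)

Section Homomorphism.
Variables (H G : Group) (i : H -> G).
Hypothesis Hi : is_hom i.

Lemma hom_one : i (@gone H) = @gone G.
Proof. apply (@gmulI G (i (@gone H))). rewrite <- Hi, gmul1l, gmul1r; auto. Qed.

Lemma hom_inv h : i (ginv h) = ginv (i h).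
Proof. apply (@gmulI G (i h)). rewrite <- Hi, !gmulVr, hom_one; auto. Qed.

Lemma hom_image_subgroup (K : H -> Prop) : is_subgroup K ->
  is_subgroup (fun g => exists h, K h /\ i h = g).
Proof.
  intros HK. repeat split.
  - exists (@gone H). split; [apply subgroup1; auto|apply hom_one].
  - intros g g' [h [Kh <-]] [h' [Kh' <-]]. exists (gmul h h'). split; [apply subgroupM; auto|apply Hi].
  - intros g [h [Kh <-]]. exists (ginv h). split; [apply subgroupV; auto|apply hom_inv].
Qed.
End Homomorphism.

Section Immersion.
Variables (G : Group) (X : cx2) (aX : cxact G X) (ang : CO X -> R)
  (H : Group) (i : H -> G) (Y : cx2) (aY : cxact H Y) (phi : cmap Y X).
Hypotheses (HX : is_Gcomplex aX) (Hang : angle_invariant aX ang)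
  (Hp : proper_action aX) (Hc : cocompact aX)
  (Hi : is_hom i) (i_inj : forall h1 h2, i h1 = i h2 -> h1 = h2)
  (HY : is_Gcomplex aY) (Himm : is_immersion phi) (Hequiv : equivariant i aY aX phi).

Let angY (c : CO Y) : R := ang (mC phi c).
Let Hphi : is_cmap phi := proj1 Himm.
Let HYcx := Gcomplex_cx2 HY.
Notation stabH b x := (stab b (@allG H) x).

Lemma phi_en_vert n : mV phi (en_vert n) = en_vert (mN phi n). Proof. apply Hphi. Qed.
Lemma phi_injN n n' : en_vert n = en_vert n' -> mN phi n = mN phi n' -> n = n'. Proof. apply Himm. Qed.
Lemma phi_injC c c' : cvert c = cvert c' -> mC phi c = mC phi c' -> c = c'. Proof. apply Himm. Qed.
Lemma phi_equivV h y : mV phi (aV aY h y) = aV aX (i h) (mV phi y). Proof. apply Hequiv. Qed.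
Lemma phi_equivF h f : mF phi (aF aY h f) = aF aX (i h) (mF phi f). Proof. apply Hequiv. Qed.
Lemma phi_equivN h n : mN phi (aN aY h n) = aN aX (i h) (mN phi n). Proof. apply Hequiv. Qed.
Lemma phi_equivC h c : mC phi (aC aY h c) = aC aX (i h) (mC phi c). Proof. apply Hequiv. Qed.

Lemma angY_invariant : angle_invariant aY angY.
Proof. intros h c. unfold angY. rewrite phi_equivC; apply Hang. Qed.

Lemma Y_ends_finite y : is_finite (fun n : NE Y => en_vert n = y).
Proof.
  apply (finite_of_inj _ (Q := fun m => en_vert m = mV phi y) (mN phi)).
  - intros n <-; rewrite phi_en_vert; auto.
  - intros n n' h1 h2; apply phi_injN; congruence.
  - destruct (ends_at_listed HX Hp Hc (mV phi y)) as [l Hl]; apply (finite_of_incl_list l); auto.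
Qed.

Lemma Y_corners_finite y : is_finite (fun c : CO Y => cvert c = y).
Proof.
  apply (finite_of_inj _ (Q := fun m => cvert m = mV phi y) (mC phi)).
  - intros n <-; rewrite cmap_cvert; auto.
  - intros n n' h1 h2; apply phi_injC; congruence.
  - destruct (corners_at_listed HX Hp Hc (mV phi y)) as [l Hl]; apply (finite_of_incl_list l); auto.
Qed.

Lemma Y_face_stab_finite f : is_finite (stabH (aF aY) f).
Proof.
  apply (finite_of_inj _ (Q := stab (aF aX) (@allG G) (mF phi f)) i).
  - intros h [_ E]. split; [exact I|]. rewrite <- phi_equivF, E; auto.
  - intros; apply i_inj; auto.
  - apply Hp.
Qed.

Lemma kappa_face_pullback f : kappa_face angY f = kappa_face ang (mF phi f).
Proof. apply (kappa_face_cmap HYcx (Gcomplex_cx2 HX) Hphi). Qed.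

Section VertexImage.
Variable y : V0 Y.

Definition link_image_group : G -> Prop := fun g => exists h, stabH (aV aY) y h /\ i h = g.
Definition link_image_ends : NE X -> Prop := fun m => exists n, en_vert n = y /\ mN phi n = m.
Definition link_image_corners : CO X -> Prop := fun d => exists c, cvert c = y /\ mC phi c = d.

Lemma link_image_group_subgroup : is_subgroup link_image_group.
Proof. apply (hom_image_subgroup Hi), stab_subgroup; [apply (actV_action HY)|apply allG_subgroup]. Qed.

Lemma kappa_vertex_image :
  kappa_vertex aY angY y = kappa_link aX ang link_image_group link_image_ends link_image_corners.
Proof.
  pose proof (vertex_link_section HY Y_ends_finite Y_corners_finite y)
    as [_ [_ [_ [DV_inv [DE_inv _]]]]].
  apply kappa_link_transport with (psi := i) (alN := mN phi) (alC := mC phi).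
  - exact link_image_group_subgroup.
  - apply (actN_action HX).
  - apply (actC_action HX).
  - intros h Kh; exists h; auto.
  - intros g2 Kg2; exact Kg2.
  - intros h h' _ _; apply i_inj.
  - exact DV_inv.
  - exact DE_inv.
  - intros h n _ _; apply phi_equivN.
  - intros h c _ _; apply phi_equivC.
  - intros n En; exists n; auto.
  - intros m Hm; exact Hm.
  - intros n n' En En'; apply phi_injN; congruence.
  - intros c Ec; exists c; auto.
  - intros d Hd; exact Hd.
  - intros c c' Ec Ec'; apply phi_injC; congruence.
  - reflexivity.
  - intros g c _ _; apply Hang.
Qed.

Lemma link_image_section : is_section aX (mV phi y) link_image_group link_image_ends link_image_corners.
Proof.
  pose proof (actN_action HX) as HN. pose proof (actC_action HX) as HC.
  pose proof link_image_group_subgroup as HK2.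
  assert (ends_at : forall m, link_image_ends m -> en_vert m = mV phi y)
    by (intros m [n [<- <-]]; symmetry; apply phi_en_vert).
  assert (corners_at : forall d, link_image_corners d -> cvert d = mV phi y)
    by (intros d [c [<- <-]]; symmetry; apply (cmap_cvert HYcx Hphi)).
  split; [|split; [|split; [|split; [|split; [|split]]]]]; auto.
  - intros d [c [Ec <-]].
    assert (E1 : en_vert (cend1 c) = y) by exact Ec.
    assert (E2 : en_vert (cend2 c) = y) by (rewrite <- (corner_ends_vert HYcx); exact Ec).
    destruct (cmap_cends Hphi c) as [[-> | ->] [-> | ->]]; split; eexists; eauto.
  - intros g m [h [[_ Eh] <-]] [n [En <-]]. exists (aN aY h n).
    rewrite en_vert_act, En, phi_equivN; auto.
  - intros g d [h [[_ Eh] <-]] [c [Ec <-]]. exists (aC aY h c).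
    rewrite cvert_act, Ec, phi_equivC; auto.
  - apply finitely_many_orbits_of_finite; auto.
    destruct (ends_at_listed HX Hp Hc (mV phi y)) as [l Hl]. apply (finite_of_incl_list l); auto.
  - apply finitely_many_orbits_of_finite; auto.
    destruct (corners_at_listed HX Hp Hc (mV phi y)) as [l Hl]. apply (finite_of_incl_list l); auto.
Qed.

Lemma kappa_vertex_section_value : section_value aX ang (kappa_vertex aY angY y).
Proof.
  exists (mV phi y), link_image_group, link_image_ends, link_image_corners.
  split; [exact link_image_group_subgroup|split; [|split; [exact link_image_section|exact kappa_vertex_image]]].
  intros g [h [[_ Eh] <-]]. rewrite <- phi_equivV, Eh; auto.
Qed.
End VertexImage.

Lemma kappa_vertex_bound v : kappa_vertex aY angY v <=
  B_minus aX ang * indicator (kappa_vertex aY angY v < 0) +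
  B_plus aX ang * indicator (0 < kappa_vertex aY angY v).
Proof.
  pose proof (kappa_vertex_section_value v) as Hv.
  destruct (Rtotal_order (kappa_vertex aY angY v) 0) as [neg|[zero|pos]].
  - rewrite indicator_true, indicator_false by lra.
    pose proof (proj2 (B_minus_spec HX Hang Hp Hc) _ Hv neg). lra.
  - rewrite !indicator_false by lra. lra.
  - rewrite indicator_false, indicator_true by lra.
    pose proof (B_plus_spec HX Hang Hp Hc Hv (Rlt_le _ _ pos)). lra.
Qed.
End Immersion.

Lemma Rle_div_neg x y b : b < 0 -> y <= x * b -> x <= y / b.
Proof.
  intros Hb Hy. apply Rmult_le_reg_r with (- b); [lra|].
  replace (y / b * - b) with (- y) by (field; lra). lra.
Qed.

Unset Implicit Arguments.

Theorem lemma7p12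
  (G : Group) (X : cx2) (aX : cxact G X) (ang : CO X -> R)
  (H : Group) (i : H -> G) (Y : cx2) (aY : cxact H Y) (phi : cmap Y X) :
  is_Gcomplex aX -> angle_invariant aX ang ->
  proper_action aX -> cocompact aX ->
  (forall f : F2 X, kappa_face ang f <= 0) ->
  is_hom i -> (forall h1 h2, i h1 = i h2 -> h1 = h2) ->
  is_Gcomplex aY -> cocompact aY ->
  is_immersion phi -> equivariant i aY aX phi ->
  nega_count aY (fun c => ang (mC phi c)) <=
    (2 * PI * chi aY - B_plus aX ang * pos_count aY (fun c => ang (mC phi c)))
    / B_minus aX ang.
Proof.
  intros HX Hang Hp Hc Hf Hi i_inj HY HcY Himm Hequiv.
  set (angY := fun c => ang (mC phi c)).
  pose proof HcY as [[sV hV] [_ [sF hF]]].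
  pose proof (Y_ends_finite HX Hp Hc Himm) as ends_fin.
  pose proof (Y_corners_finite HX Hp Hc HY Himm) as corners_fin.
  pose proof (angY_invariant Hang Hequiv) as HangY.
  pose proof (gauss_bonnet HY HcY HangY ends_fin corners_fin
    (Y_face_stab_finite Hp i_inj Hequiv) hV hF) as GB.
  assert (faces : lsum (fun f => kappa_face angY f * inv_card (stab (aF aY) (@allG H) f)) sF <= 0).
  { apply lsum_nonpos; intros f _. rewrite (kappa_face_pullback ang HX HY Himm).
    pose proof (Hf (mF phi f)). pose proof (inv_card_nonneg (stab (aF aY) (@allG H) f)). nra. }
  assert (vertices : lsum (kappa_vertex aY angY) sV <=
    B_minus aX ang * lsum (fun v => indicator (kappa_vertex aY angY v < 0)) sV +
    B_plus aX ang * lsum (fun v => indicator (0 < kappa_vertex aY angY v)) sV).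
  { rewrite <- !lsum_scal, <- lsum_add. apply lsum_le; intros v _.
    apply (kappa_vertex_bound HX Hang Hp Hc Hi i_inj HY Himm Hequiv). }
  unfold nega_count, pos_count.
  rewrite !(orbit_count_reps _ (actV_action HY) hV)
    by (intros g x; rewrite (kappa_vertex_act HY HangY ends_fin corners_fin); tauto).
  apply Rle_div_neg; [apply (B_minus_spec HX Hang Hp Hc)|]. unfold angY in *. lra.
Qed.
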